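(* For complex parameters $a,b,c,d$ such that the series on the left converges and all terms are defined, $${}_3F_2\!\left[\begin{matrix}a,\ b,\ d+2\\ c+1,\ d\end{matrix};1\right]=\frac{\Gamma(c+1)\Gamma(c-a-b)}{\Gamma(c-a+1)\Gamma(c-b+1)}\left\{(c-a-b)+\frac{2ab}{d}+\frac{ab(a+1)(b+1)}{d(d+1)(c-a-b-1)}\right\}.$$
   Context: $(a)_k=a(a+1)\cdots(a+k-1)$ is the Pochhammer symbol and ${}_3F_2\!\left[\begin{matrix}a_1,a_2,a_3\\ b_1,b_2\end{matrix};z\right]=\sum_{k\ge0}\frac{(a_1)_k(a_2)_k(a_3)_k}{(b_1)_k(b_2)_k}\frac{z^k}{k!}$. *)

From Stdlib Require Import Reals Arith.
From Coquelicot Require Import Coquelicot.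
Open Scope C_scope.

Fixpoint poch (a : C) (k : nat) : C :=
  match k with
  | O => 1
  | S k' => poch a k' * (a + RtoC (INR k'))
  end.

Definition F32_term (a1 a2 a3 b1 b2 z : C) (k : nat) : C :=
  (poch a1 k * poch a2 k * poch a3 k) / (poch b1 k * poch b2 k)
  * (Cpow z k / RtoC (INR (fact k))).

(* Complex power x^z = exp(z ln x) for a real x > 0. *)
Definition Rcpow (x : R) (z : C) : C :=
  ((exp (Re z * ln x) * cos (Im z * ln x))%R, (exp (Re z * ln x) * sin (Im z * ln x))%R).

(* Gauss's product formula: Gamma(z) = lim_n n! n^z / (z (z+1) ... (z+n)). *)
Definition gauss_seq (z : C) (n : nat) : C :=
  RtoC (INR (fact n)) * Rcpow (INR n) z / poch z (S n).

(* The (complex) Gamma function, defined as the limit of gauss_seq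
   (componentwise limit; meaningful away from the poles 0, -1, -2, ...). *)
Definition CGamma (z : C) : C :=
  (real (Lim_seq (fun n => Re (gauss_seq z n))),
   real (Lim_seq (fun n => Im (gauss_seq z n)))).

Definition nonpos_int (z : C) : Prop := exists n : nat, z = RtoC (- INR n).

(* Write u_k = (a)_k (b)_k / ((c+1)_k k!) for the terms of 2F1(a,b;c+1;1).  Since
   (d+2)_k / (d)_k = (d+k)(d+k+1) / (d(d+1)), the k-th term of the 3F2 is
   u_k (d(d+1) + 2(d+1) k + k(k-1)) / (d(d+1)), so the 3F2 is a combination of the
   moments U = sum u_k, V = sum k u_k and W = sum k(k-1) u_k.

   U is given by Gauss's summation theorem.  For the terms t_n of F(A,B;c), the contiguous
   relation c(c-A-B) F(A,B;c) = (c-A)(c-B) F(A,B;c+1) holds for partial sums up to a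
   boundary term n t_n; iterating it m times produces a ratio of Pochhammer symbols, which
   tends to the Gamma quotient by Gauss's product formula, while F(A,B;c+m) -> 1.  The
   Gauss product itself converges because its factors are 1 + O(1/n^2).

   V and W satisfy the telescoping identities
     (c-a-b) V_n - ab U_n = -n(c+n) u_n,
     (c-a-b-1) W_n - (1+a)(1+b) V_n = -(n-1)n(c+n) u_n.
   The first boundary term vanishes in the limit because n^2 u_n -> 0.  So does the second:
   a nonzero limit would make the 3F2 terms behave like a multiple of 1/n, contradicting
   the convergence of the series. *)

From Stdlib Require Import Reals Lra Lia ZArith.
From Coquelicot Require Import Coquelicot.
Open Scope C_scope.

Lemma Cminus_0_r (x : C) : x - 0 = x.
Proof. ring. Qed.

Lemma Cmod_sub_sym (x y : C) : Cmod (x - y) = Cmod (y - x).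
Proof. replace (x - y) with (- (y - x)) by ring. apply Cmod_opp. Qed.

Lemma Cmod_triangle_sub (x y z : C) : (Cmod (x - z) <= Cmod (x - y) + Cmod (y - z))%R.
Proof. replace (x - z) with ((x - y) + (y - z)) by ring. apply Cmod_triangle. Qed.

Lemma Cmod_le_Rabs_Re_Im (p : C) : (Cmod p <= Rabs (Re p) + Rabs (Im p))%R.
Proof.
  unfold Cmod. pose proof (Rabs_pos (Re p)); pose proof (Rabs_pos (Im p)).
  rewrite <- (sqrt_pow2 (Rabs (Re p) + Rabs (Im p))) by lra.
  apply sqrt_le_1_alt.
  rewrite <- (pow2_abs (fst p)), <- (pow2_abs (snd p)). unfold Re, Im in *. nra.
Qed.

Lemma Cinv_neq_0 (y : C) : y <> 0 -> / y <> 0.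
Proof. intros H E. pose proof (Cinv_r y H) as H1. rewrite E, Cmult_0_r in H1. now apply C1_nz. Qed.

Lemma Cdiv_neq_0 (x y : C) : x <> 0 -> y <> 0 -> x / y <> 0.
Proof. intros. apply Cmult_neq_0; auto. now apply Cinv_neq_0. Qed.

Lemma RtoC_neq_0 (r : R) : r <> 0%R -> RtoC r <> 0.
Proof. intros H E. apply H. now apply (f_equal Re) in E. Qed.

Lemma INR_fact_neq_0_C (k : nat) : RtoC (INR (fact k)) <> 0.
Proof. apply RtoC_neq_0, INR_fact_neq_0. Qed.

Lemma INR_plus_1_neq_0_C (k : nat) : RtoC (INR k) + 1 <> 0.
Proof. rewrite <- RtoC_plus, <- S_INR. apply RtoC_neq_0, not_0_INR. lia. Qed.

Lemma INR_unbounded (x : R) : exists N : nat, (x <= INR N)%R.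
Proof.
  destruct (Rle_or_lt x 0) as [H|H]; [exists 0%nat; simpl; lra|].
  destruct (archimed x) as [H1 _]. exists (Z.to_nat (up x)).
  rewrite INR_IZR_INZ, Z2Nat.id; [lra|]. apply le_IZR. lra.
Qed.

(** * Convergence of complex sequences *)

Definition cvC (u : nat -> C) (L : C) :=
  forall eps : R, (0 < eps)%R ->
    exists N : nat, forall n, (N <= n)%nat -> (Cmod (u n - L) < eps)%R.

Lemma cvC_const (L : C) : cvC (fun _ => L) L.
Proof.
  intros e He; exists 0%nat; intros n _.
  replace (L - L) with (RtoC 0) by ring. rewrite Cmod_0; lra.
Qed.

Lemma cvC_ext_eventually (u v : nat -> C) (L : C) (N0 : nat) :
  (forall n, (N0 <= n)%nat -> u n = v n) -> cvC u L -> cvC v L.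
Proof.
  intros H Hu e He. destruct (Hu e He) as [N HN]. exists (max N N0).
  intros n Hn. rewrite <- H by lia. apply HN; lia.
Qed.

Lemma cvC_ext (u v : nat -> C) (L : C) : (forall n, u n = v n) -> cvC u L -> cvC v L.
Proof. intros H. apply (cvC_ext_eventually u v L 0). auto. Qed.

Lemma cvC_plus (u v : nat -> C) (L M : C) :
  cvC u L -> cvC v M -> cvC (fun n => u n + v n) (L + M).
Proof.
  intros Hu Hv e He.
  destruct (Hu (e/2)%R) as [N1 H1]; [lra|]. destruct (Hv (e/2)%R) as [N2 H2]; [lra|].
  exists (max N1 N2). intros n Hn.
  replace (u n + v n - (L + M)) with ((u n - L) + (v n - M)) by ring.
  eapply Rle_lt_trans; [apply Cmod_triangle|].
  specialize (H1 n ltac:(lia)); specialize (H2 n ltac:(lia)); lra.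
Qed.

Lemma cvC_opp (u : nat -> C) (L : C) : cvC u L -> cvC (fun n => - u n) (- L).
Proof.
  intros Hu e He. destruct (Hu e He) as [N H]. exists N. intros n Hn.
  replace (- u n - - L) with (- (u n - L)) by ring. rewrite Cmod_opp. auto.
Qed.

Lemma cvC_minus (u v : nat -> C) (L M : C) :
  cvC u L -> cvC v M -> cvC (fun n => u n - v n) (L - M).
Proof. intros. apply (cvC_plus u (fun n => - v n)); auto. now apply cvC_opp. Qed.

Lemma cvC_bounded (u : nat -> C) (L : C) :
  cvC u L -> exists N, forall n, (N <= n)%nat -> (Cmod (u n) <= Cmod L + 1)%R.
Proof.
  intros Hu. destruct (Hu 1%R) as [N HN]; [lra|]. exists N. intros n Hn.
  replace (u n) with ((u n - L) + L) by ring.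
  eapply Rle_trans; [apply Cmod_triangle|]. specialize (HN n Hn). lra.
Qed.

Lemma cvC_mult_0_bounded (u v : nat -> C) (M : R) (N0 : nat) :
  cvC u 0 -> (forall n, (N0 <= n)%nat -> (Cmod (v n) <= M)%R) ->
  cvC (fun n => u n * v n) 0.
Proof.
  intros Hu Hv e He.
  assert (HM : (0 < Rabs M + 1)%R) by (pose proof (Rabs_pos M); lra).
  destruct (Hu (e / (Rabs M + 1))%R) as [N HN]. { apply Rdiv_lt_0_compat; lra. }
  exists (max N N0). intros n Hn.
  replace (u n * v n - 0) with ((u n - 0) * v n) by ring. rewrite Cmod_mult.
  specialize (HN n ltac:(lia)). specialize (Hv n ltac:(lia)).
  pose proof (Cmod_ge_0 (u n - 0)). pose proof (Cmod_ge_0 (v n)). pose proof (Rle_abs M).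
  apply Rle_lt_trans with (Cmod (u n - 0) * (Rabs M + 1))%R.
  { apply Rmult_le_compat_l; lra. }
  apply Rmult_lt_reg_r with (/ (Rabs M + 1))%R. { apply Rinv_0_lt_compat; lra. }
  rewrite Rmult_assoc, Rinv_r, Rmult_1_r by lra. exact HN.
Qed.

Lemma cvC_sub_limit (u : nat -> C) (L : C) : cvC u L -> cvC (fun n => u n - L) 0.
Proof.
  intros Hu e He. destruct (Hu e He) as [N HN]. exists N. intros n Hn.
  replace (u n - L - 0) with (u n - L) by ring. auto.
Qed.

Lemma cvC_of_sub_limit (u : nat -> C) (L : C) : cvC (fun n => u n - L) 0 -> cvC u L.
Proof.
  intros Hu e He. destruct (Hu e He) as [N HN]. exists N. intros n Hn.
  specialize (HN n Hn). replace (u n - L - 0) with (u n - L) in HN by ring. auto.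
Qed.

Lemma cvC_mult (u v : nat -> C) (L M : C) :
  cvC u L -> cvC v M -> cvC (fun n => u n * v n) (L * M).
Proof.
  intros Hu Hv. apply cvC_of_sub_limit.
  destruct (cvC_bounded v M Hv) as [N HN].
  apply cvC_ext with (fun n => ((u n - L) * v n) + ((v n - M) * L)). { intros; ring. }
  replace (RtoC 0) with (RtoC 0 + RtoC 0) by ring.
  apply cvC_plus.
  - apply (cvC_mult_0_bounded _ _ (Cmod M + 1) N); auto. now apply cvC_sub_limit.
  - apply (cvC_mult_0_bounded _ _ (Cmod L) 0); [now apply cvC_sub_limit|]. intros; lra.
Qed.

Lemma cvC_scal_l (k : C) (u : nat -> C) (L : C) : cvC u L -> cvC (fun n => k * u n) (k * L).
Proof. apply cvC_mult, cvC_const. Qed.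

Lemma cvC_inv (u : nat -> C) (L : C) : L <> 0 -> cvC u L -> cvC (fun n => / u n) (/ L).
Proof.
  intros HL Hu. apply Cmod_gt_0 in HL as HL'.
  destruct (Hu (Cmod L / 2)%R) as [N1 H1]; [lra|].
  assert (Hun : forall n, (N1 <= n)%nat -> (Cmod L / 2 <= Cmod (u n))%R).
  { intros n Hn. specialize (H1 n Hn). pose proof (Cmod_triangle_sub L (u n) 0) as H.
    rewrite Cmod_sub_sym in H1. rewrite !Cminus_0_r in H. lra. }
  assert (Hu0 : forall n, (N1 <= n)%nat -> u n <> 0).
  { intros n Hn E. specialize (Hun n Hn). rewrite E, Cmod_0 in Hun. lra. }
  apply cvC_of_sub_limit.
  apply (cvC_ext_eventually (fun n => (u n - L) * (- / (u n * L))) _ _ N1).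
  { intros n Hn. specialize (Hu0 n Hn). field. auto. }
  apply (cvC_mult_0_bounded _ _ (2 / (Cmod L * Cmod L))%R N1); [now apply cvC_sub_limit|].
  intros n Hn. specialize (Hun n Hn). specialize (Hu0 n Hn).
  rewrite Cmod_opp, Cmod_inv, Cmod_mult by (apply Cmult_neq_0; auto).
  apply Rle_trans with (/ (Cmod L / 2 * Cmod L))%R.
  - apply Rinv_le_contravar. { apply Rmult_lt_0_compat; lra. }
    apply Rmult_le_compat_r; lra.
  - right. field. lra.
Qed.

Lemma cvC_unique (u : nat -> C) (L M : C) : cvC u L -> cvC u M -> L = M.
Proof.
  intros HL HM. destruct (Req_dec (Cmod (L - M)) 0) as [E|E].
  - apply Cmod_eq_0 in E. replace L with ((L - M) + M) by ring. rewrite E. ring.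
  - pose proof (Cmod_ge_0 (L - M)).
    destruct (HL (Cmod (L - M) / 2)%R) as [N1 H1]; [lra|].
    destruct (HM (Cmod (L - M) / 2)%R) as [N2 H2]; [lra|].
    specialize (H1 (max N1 N2) ltac:(lia)). specialize (H2 (max N1 N2) ltac:(lia)).
    pose proof (Cmod_triangle_sub L (u (max N1 N2)) M). rewrite Cmod_sub_sym in H1. lra.
Qed.

Lemma cvC_of_shift (u : nat -> C) (L : C) : cvC (fun n => u (S n)) L -> cvC u L.
Proof.
  intros H e He. destruct (H e He) as [N HN]. exists (S N). intros n Hn.
  destruct n; [lia|]. apply HN; lia.
Qed.

Lemma cvC_shift (u : nat -> C) (L : C) : cvC u L -> cvC (fun n => u (S n)) L.
Proof. intros H e He. destruct (H e He) as [N HN]. exists N. intros n Hn. apply HN; lia. Qed.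

Lemma cvC_dominated (v : nat -> C) (L : C) (d : nat -> R) (N0 : nat) :
  (forall eps, (0 < eps)%R -> exists N, forall n, (N <= n)%nat -> (d n < eps)%R) ->
  (forall n, (N0 <= n)%nat -> (Cmod (v n - L) <= d n)%R) -> cvC v L.
Proof.
  intros Hd Hb e He. destruct (Hd e He) as [N HN]. exists (max N N0). intros n Hn.
  eapply Rle_lt_trans; [apply Hb; lia|]. apply HN; lia.
Qed.

Lemma cvC_limit_le (x : nat -> C) (L P : C) (D : R) (N : nat) :
  cvC x L -> (forall n, (N <= n)%nat -> (Cmod (x n - P) <= D)%R) -> (Cmod (L - P) <= D)%R.
Proof.
  intros H Hb. destruct (Rle_or_lt (Cmod (L - P)) D) as [|Hlt]; auto. exfalso.
  destruct (H (Cmod (L - P) - D)%R) as [N1 HN1]; [lra|].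
  specialize (HN1 (max N N1) ltac:(lia)). specialize (Hb (max N N1) ltac:(lia)).
  pose proof (Cmod_triangle_sub L (x (max N N1)) P). rewrite Cmod_sub_sym in HN1. lra.
Qed.

Lemma Rdiv_plus_INR_cv_0 (K r : R) : (0 <= K)%R ->
  forall eps, (0 < eps)%R -> exists N, forall n, (N <= n)%nat -> (K / (r + INR n) < eps)%R.
Proof.
  intros HK eps He. destruct (INR_unbounded (K / eps + Rabs r + 1)) as [N HN].
  exists N. intros n Hn.
  assert (Hn' : (INR N <= INR n)%R) by (apply le_INR; auto).
  pose proof (Rle_abs (- r)) as Hr. rewrite Rabs_Ropp in Hr.
  assert (HKe : (0 <= K / eps)%R) by (apply Rdiv_le_0_compat; lra).
  apply Rle_lt_trans with (K / (K / eps + 1))%R.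
  - unfold Rdiv at 1 2. apply Rmult_le_compat_l; auto. apply Rinv_le_contravar; lra.
  - apply Rmult_lt_reg_r with (K / eps + 1)%R; [lra|].
    unfold Rdiv at 1. rewrite Rmult_assoc, Rinv_l by lra.
    replace (eps * (K / eps + 1))%R with (K + eps)%R by (field; lra). lra.
Qed.

Lemma cvC_inv_INR : cvC (fun n => / RtoC (INR n)) 0.
Proof.
  apply (cvC_dominated _ _ (fun n => 1 / (0 + INR n))%R 1).
  - apply Rdiv_plus_INR_cv_0. lra.
  - intros n Hn. assert (0 < INR n)%R by (apply lt_0_INR; lia).
    rewrite Cminus_0_r, Cmod_inv, Cmod_R, Rabs_pos_eq by (apply RtoC_neq_0 || idtac; lra).
    right. field. lra.
Qed.

Lemma cvC_div_INR (x y : C) : cvC (fun n => (x + RtoC (INR n)) / (y + RtoC (INR n))) 1.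
Proof.
  destruct (INR_unbounded (Cmod y + 1)) as [N HN].
  apply (cvC_ext_eventually
    (fun n => (1 + x * / RtoC (INR n)) * / (1 + y * / RtoC (INR n))) _ _ (max 1 N)).
  { intros n Hn. assert (Hn0 : RtoC (INR n) <> 0) by (apply RtoC_neq_0, not_0_INR; lia).
    assert (Hy : y + RtoC (INR n) <> 0).
    { intro E. assert (INR N <= INR n)%R by (apply le_INR; lia).
      assert (Ey : y = - RtoC (INR n))
        by (replace y with ((y + RtoC (INR n)) - RtoC (INR n)) by ring; rewrite E; ring).
      rewrite Ey, Cmod_opp, Cmod_R, Rabs_pos_eq in HN by apply pos_INR. lra. }
    assert (1 + y * / RtoC (INR n) <> 0).
    { intro E. apply Hy.
      replace (y + RtoC (INR n)) with ((1 + y * / RtoC (INR n)) * RtoC (INR n)) by (field; auto).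
      rewrite E. ring. }
    field. auto. }
  assert (Hlin : forall z, cvC (fun n => 1 + z * / RtoC (INR n)) 1).
  { intros z. pose proof (cvC_plus _ _ _ _ (cvC_const 1) (cvC_scal_l z _ _ cvC_inv_INR)) as H.
    now rewrite Cmult_0_r, Cplus_0_r in H. }
  pose proof (cvC_mult _ _ _ _ (Hlin x) (cvC_inv _ _ C1_nz (Hlin y))) as H.
  replace (1 * / 1) with (RtoC 1) in H by (field; apply C1_nz). exact H.
Qed.

Lemma cvC_INR_div (y : C) : cvC (fun n => RtoC (INR n) / (y + RtoC (INR n))) 1.
Proof.
  apply (cvC_ext (fun n => (0 + RtoC (INR n)) / (y + RtoC (INR n)))); [|apply cvC_div_INR].
  intros; now rewrite Cplus_0_l.
Qed.

Lemma cvC_of_Cauchy (x : nat -> C) :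
  (forall eps, (0 < eps)%R -> exists N, forall n m, (N <= n)%nat -> (N <= m)%nat ->
     (Cmod (x n - x m) < eps)%R) ->
  exists L, cvC x L.
Proof.
  intros H.
  assert (HRe : Cauchy_crit (fun n => Re (x n))).
  { intros e He. destruct (H e He) as [N HN]. exists N. intros n m Hn Hm. unfold Rdist.
    eapply Rle_lt_trans; [|apply (HN n m Hn Hm)].
    eapply Rle_trans; [|apply re_le_Cmod]. now right. }
  assert (HIm : Cauchy_crit (fun n => Im (x n))).
  { intros e He. destruct (H e He) as [N HN]. exists N. intros n m Hn Hm. unfold Rdist.
    eapply Rle_lt_trans; [|apply (HN n m Hn Hm)]. eapply Rle_trans; [|apply Rmax_Cmod].
    apply Rmax_r. }
  destruct (Rcomplete.R_complete _ HRe) as [lr Hr].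
  destruct (Rcomplete.R_complete _ HIm) as [li Hi].
  exists (lr, li). intros e He.
  destruct (Hr (e/2)%R) as [N1 H1]; [lra|]. destruct (Hi (e/2)%R) as [N2 H2]; [lra|].
  exists (max N1 N2). intros n Hn. eapply Rle_lt_trans; [apply Cmod_le_Rabs_Re_Im|].
  specialize (H1 n ltac:(lia)). specialize (H2 n ltac:(lia)). unfold Rdist in *.
  unfold Re, Im in *. simpl in *. unfold Rminus in *. lra.
Qed.

Lemma cvC_of_harmonic_Cauchy (x : nat -> C) (D : R) (N : nat) : (1 <= N)%nat -> (0 <= D)%R ->
  (forall n j, (N <= n)%nat -> (Cmod (x (n + j)%nat - x n) <= D * (/ INR n - / INR (n + j)))%R) ->
  exists L, cvC x L.
Proof.
  intros HN HD Hc. apply cvC_of_Cauchy. intros e He.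
  destruct (INR_unbounded ((D + 1) / e)) as [N0 HN0].
  exists (max N0 N). intros n m Hn Hm.
  assert (Hpos : forall p, (N <= p)%nat -> (0 < INR p)%R) by (intros p Hp; apply lt_0_INR; lia).
  assert (Hgen : forall p q, (N0 <= p)%nat -> (N <= p)%nat -> (p <= q)%nat ->
             (Cmod (x q - x p) < e)%R).
  { intros p q Hp1 Hp2 Hpq. replace q with (p + (q - p))%nat by lia.
    eapply Rle_lt_trans; [apply Hc; auto|].
    assert (Hpp : (INR N0 <= INR p)%R) by (apply le_INR; lia).
    assert (0 < INR (p + (q - p)))%R by (apply Hpos; lia).
    assert (0 < / INR (p + (q - p)))%R by (apply Rinv_0_lt_compat; lra).
    apply Rle_lt_trans with (D * / INR p)%R; [apply Rmult_le_compat_l; lra|].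
    assert (Hp0 : (0 < INR p)%R) by (apply Hpos; auto).
    apply Rmult_lt_reg_r with (INR p); auto. rewrite Rmult_assoc, Rinv_l, Rmult_1_r by lra.
    assert ((D + 1) <= e * INR p)%R.
    { apply Rmult_le_reg_r with (/ e)%R. { apply Rinv_0_lt_compat; lra. }
      replace (e * INR p * / e)%R with (INR p) by (field; lra). unfold Rdiv in HN0. lra. }
    lra. }
  destruct (Nat.le_ge_cases n m) as [Hnm|Hnm].
  - rewrite Cmod_sub_sym. apply Hgen; lia.
  - apply Hgen; lia.
Qed.

Section InfiniteProduct.

Variables (x r : nat -> C) (N : nat) (K : R).
Hypothesis HN : (1 <= N)%nat.
Hypothesis Hx : forall n, (N <= n)%nat -> x (S n) = x n * r n.
Hypothesis Hr : forall n, (N <= n)%nat -> (Cmod (r n - 1) <= K / (INR n * INR (S n)))%R.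

Let Hpos (n : nat) : (N <= n)%nat -> (0 < INR n)%R.
Proof. intros; apply lt_0_INR; lia. Qed.

Let Hpos2 (n : nat) : (N <= n)%nat -> (0 < INR n * INR (S n))%R.
Proof. intros; apply Rmult_lt_0_compat; [apply Hpos; auto|apply lt_0_INR; lia]. Qed.

Lemma product_factor_bound_nonneg : (0 <= K)%R.
Proof.
  specialize (Hr N (le_n N)). pose proof (Cmod_ge_0 (r N - 1)). pose proof (Hpos2 N (le_n N)).
  destruct (Rle_or_lt 0 K); auto.
  assert (K / (INR N * INR (S N)) < 0)%R by (apply Rdiv_neg_pos; auto). lra.
Qed.

Lemma product_increment_le (n : nat) : (N <= n)%nat ->
  (Cmod (x (S n) - x n) <= Cmod (x n) * (K / (INR n * INR (S n))))%R.
Proof.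
  intros Hn. rewrite Hx by auto. replace (x n * r n - x n) with (x n * (r n - 1)) by ring.
  rewrite Cmod_mult. apply Rmult_le_compat_l; [apply Cmod_ge_0|auto].
Qed.

(* |x_(N+k)| <= |x_N| prod (1 + K/(n(n+1))) <= |x_N| exp (K (1/N - 1/(N+k))). *)
Lemma product_bounded : forall n, (N <= n)%nat -> (Cmod (x n) <= Cmod (x N) * exp (K / INR N))%R.
Proof.
  pose proof product_factor_bound_nonneg as HK. pose proof (Hpos N (le_n N)).
  assert (Hbd : forall k,
    (Cmod (x (N + k)%nat) <= Cmod (x N) * exp (K * (/ INR N - / INR (N + k))))%R).
  { induction k.
    - rewrite Nat.add_0_r, Rminus_diag, Rmult_0_r, exp_0. lra.
    - rewrite Nat.add_succ_r.
      assert (Hp : (0 < INR (N + k))%R) by (apply Hpos; lia).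
      pose proof (product_increment_le (N + k)%nat ltac:(lia)).
      pose proof (Cmod_triangle_sub (x (S (N + k))) (x (N + k)%nat) 0) as Ht.
      rewrite !Cminus_0_r in Ht.
      assert (Hq : (0 <= K / (INR (N + k) * INR (S (N + k))))%R)
        by (apply Rdiv_le_0_compat; auto; apply Hpos2; lia).
      replace (K * (/ INR N - / INR (S (N + k))))%R with
        (K * (/ INR N - / INR (N + k)) + K / (INR (N + k) * INR (S (N + k))))%R
        by (rewrite S_INR; field; lra).
      rewrite exp_plus.
      pose proof (exp_ineq1_le (K / (INR (N + k) * INR (S (N + k))))).
      pose proof (Cmod_ge_0 (x (N + k)%nat)). pose proof (Cmod_ge_0 (x N)).
      pose proof (exp_pos (K * (/ INR N - / INR (N + k)))).
      apply Rle_trans with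
        (Cmod (x (N + k)%nat) * (1 + K / (INR (N + k) * INR (S (N + k)))))%R; [lra|].
      rewrite <- Rmult_assoc. apply Rmult_le_compat; lra. }
  intros n Hn. replace n with (N + (n - N))%nat by lia. eapply Rle_trans; [apply Hbd|].
  apply Rmult_le_compat_l; [apply Cmod_ge_0|].
  assert (0 < INR (N + (n - N)))%R by (apply Hpos; lia).
  assert (0 < / INR (N + (n - N)))%R by (apply Rinv_0_lt_compat; lra).
  assert (Hle : (K * (/ INR N - / INR (N + (n - N))) <= K / INR N)%R) by (unfold Rdiv; nra).
  destruct Hle as [Hlt|Heq]; [left; now apply exp_increasing|rewrite Heq; lra].
Qed.

Lemma cvC_product : exists L, cvC x L.
Proof.
  pose proof product_factor_bound_nonneg as HK.
  set (M := (Cmod (x N) * exp (K / INR N))%R).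
  assert (HM0 : (0 <= M)%R)
    by (unfold M; apply Rmult_le_pos; [apply Cmod_ge_0|left; apply exp_pos]).
  apply (cvC_of_harmonic_Cauchy x (M * K) N HN); [now apply Rmult_le_pos|].
  intros n k Hn. induction k.
  - rewrite Nat.add_0_r. replace (x n - x n) with (RtoC 0) by ring. rewrite Cmod_0. right; ring.
  - rewrite Nat.add_succ_r. eapply Rle_trans; [apply (Cmod_triangle_sub _ (x (n + k)%nat))|].
    assert (Hp : (0 < INR (n + k))%R) by (apply Hpos; lia).
    pose proof (Hpos n Hn).
    pose proof (product_increment_le (n + k)%nat ltac:(lia)) as Hi.
    pose proof (product_bounded (n + k)%nat ltac:(lia)). fold M in H0.
    assert (Hq : (0 <= K / (INR (n + k) * INR (S (n + k))))%R)
      by (apply Rdiv_le_0_compat; auto; apply Hpos2; lia).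
    replace (M * K * (/ INR n - / INR (S (n + k))))%R with
      (M * (K / (INR (n + k) * INR (S (n + k)))) + M * K * (/ INR n - / INR (n + k)))%R
      by (rewrite S_INR; field; lra).
    apply Rplus_le_compat; auto. eapply Rle_trans; [exact Hi|].
    apply Rmult_le_compat_r; auto.
Qed.

End InfiniteProduct.

Lemma Cmod_inv_sub_1_le (r : C) (e : R) : (Cmod (r - 1) <= e)%R -> (e <= 1/2)%R ->
  (Cmod (/ r - 1) <= 2 * e)%R.
Proof.
  intros Hr He.
  assert (Hrn : (1/2 <= Cmod r)%R).
  { pose proof (Cmod_triangle_sub 1 r 0) as H. rewrite Cmod_sub_sym in Hr.
    rewrite !Cminus_0_r, Cmod_1 in H. lra. }
  assert (r <> 0) by (intro E; rewrite E, Cmod_0 in Hrn; lra).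
  replace (/ r - 1) with ((1 - r) / r) by (field; auto).
  rewrite Cmod_div, Cmod_sub_sym by auto.
  apply Rle_trans with (Cmod (r - 1) / (1/2))%R.
  - unfold Rdiv. apply Rmult_le_compat_l; [apply Cmod_ge_0|]. apply Rinv_le_contravar; lra.
  - unfold Rdiv in *. lra.
Qed.

(* The reciprocal product converges too, so the limit cannot vanish. *)
Lemma cvC_product_neq_0 (x r : nat -> C) (N : nat) (K : R) :
  (1 <= N)%nat ->
  (forall n, (N <= n)%nat -> x (S n) = x n * r n) ->
  (forall n, (N <= n)%nat -> (Cmod (r n - 1) <= K / (INR n * INR (S n)))%R) ->
  x N <> 0 -> (forall n, (N <= n)%nat -> r n <> 0) ->
  exists L : C, L <> 0 /\ cvC x L.
Proof.
  intros HN Hx Hr HxN HrN.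
  destruct (cvC_product x r N K HN Hx Hr) as [L HL].
  assert (Hxnz : forall n, (N <= n)%nat -> x n <> 0).
  { intros n Hn. replace n with (N + (n - N))%nat by lia. induction (n - N)%nat as [|k IH].
    - now rewrite Nat.add_0_r.
    - rewrite Nat.add_succ_r, Hx by lia. apply Cmult_neq_0; [auto|apply HrN; lia]. }
  destruct (INR_unbounded (2 * K)) as [N' HN'].
  set (N1 := max N N').
  assert (HN1 : (N <= N1)%nat) by (unfold N1; lia).
  assert (HN1' : (INR N' <= INR N1)%R) by (apply le_INR; unfold N1; lia).
  assert (Hr2 : forall n, (N1 <= n)%nat ->
             (Cmod (/ r n - 1) <= (2 * K) / (INR n * INR (S n)))%R).
  { intros n Hn. specialize (Hr n ltac:(lia)).
    assert (Hn0 : (1 <= INR n)%R) by (apply (le_INR 1); lia).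
    assert (Hn1 : (INR N1 <= INR n)%R) by (apply le_INR; lia).
    assert (Hsmall : (K / (INR n * INR (S n)) <= 1/2)%R).
    { rewrite S_INR. apply Rmult_le_reg_r with (INR n * (INR n + 1))%R; [nra|].
      unfold Rdiv. rewrite Rmult_assoc, Rinv_l by nra. nra. }
    replace (2 * K / (INR n * INR (S n)))%R with (2 * (K / (INR n * INR (S n))))%R
      by (unfold Rdiv; ring).
    now apply Cmod_inv_sub_1_le. }
  assert (Hy : forall n, (N1 <= n)%nat -> / x (S n) = / x n * / r n).
  { intros n Hn. rewrite Hx by lia. field. split; [apply HrN|apply Hxnz]; lia. }
  destruct (cvC_product (fun n => / x n) (fun n => / r n) N1 (2 * K) ltac:(lia) Hy Hr2)
    as [L' HL'].
  exists L. split; auto. intro E.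
  assert (Hm1 : cvC (fun n => x n * / x n) 1).
  { apply (cvC_ext_eventually (fun _ => 1) _ _ N); [|apply cvC_const].
    intros n Hn. field. now apply Hxnz. }
  pose proof (cvC_unique _ _ _ (cvC_mult _ _ _ _ HL HL') Hm1) as H1.
  rewrite E, Cmult_0_l in H1. now apply C1_nz.
Qed.

Lemma cvC_Re (u : nat -> C) (L : C) : cvC u L -> is_lim_seq (fun n => Re (u n)) (Re L).
Proof.
  intros H. apply is_lim_seq_spec. intros eps. destruct (H eps (cond_pos eps)) as [N HN].
  exists N. intros n Hn. eapply Rle_lt_trans; [|apply (HN n Hn)].
  eapply Rle_trans; [|apply re_le_Cmod]. now right.
Qed.

Lemma cvC_Im (u : nat -> C) (L : C) : cvC u L -> is_lim_seq (fun n => Im (u n)) (Im L).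
Proof.
  intros H. apply is_lim_seq_spec. intros eps. destruct (H eps (cond_pos eps)) as [N HN].
  exists N. intros n Hn. eapply Rle_lt_trans; [|apply (HN n Hn)].
  eapply Rle_trans; [|apply Rmax_Cmod]. apply Rmax_r.
Qed.

Lemma cvC_of_is_series (a : nat -> C) (L : C) : is_series a L -> cvC (sum_n a) L.
Proof.
  intros H e He.
  assert (Hs : (0 < sqrt 2)%R) by (apply sqrt_lt_R0; lra).
  assert (He' : (0 < e / sqrt 2)%R) by (apply Rdiv_lt_0_compat; auto).
  destruct (H (ball L (mkposreal _ He'))) as [N HN]; [now exists (mkposreal _ He')|].
  exists N. intros n Hn. specialize (HN n Hn).
  apply C_NormedModule_mixin_compat2 in HN. simpl in HN.
  replace e with (sqrt 2 * (e / sqrt 2))%R by (field; lra). exact HN.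
Qed.

(* [psum f n] is the sum of the first [n] terms (Coquelicot's [sum_n f n] has [n + 1]). *)
Fixpoint psum (f : nat -> C) (n : nat) : C :=
  match n with O => 0 | S n' => psum f n' + f n' end.

Lemma sum_n_psum (f : nat -> C) (n : nat) : sum_n f n = psum f (S n).
Proof.
  induction n; [rewrite sum_O; simpl; ring|].
  rewrite sum_Sn, IHn. reflexivity.
Qed.

Lemma psum_harmonic_increment (f : nat -> C) (D : R) :
  (forall k, (1 <= k)%nat -> (Cmod (f k) <= D * (/ INR k - / INR (S k)))%R) ->
  forall n j, (1 <= n)%nat ->
    (Cmod (psum f (n + j) - psum f n) <= D * (/ INR n - / INR (n + j)))%R.
Proof.
  intros Hf n j Hn. induction j.
  - rewrite Nat.add_0_r. replace (psum f n - psum f n) with (RtoC 0) by ring.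
    rewrite Cmod_0. right; ring.
  - rewrite Nat.add_succ_r. simpl psum.
    replace (psum f (n + j) + f (n + j)%nat - psum f n) with
      ((psum f (n + j) - psum f n) + f (n + j)%nat) by ring.
    eapply Rle_trans; [apply Cmod_triangle|].
    pose proof (Hf (n + j)%nat ltac:(lia)).
    replace (D * (/ INR n - / INR (S (n + j))))%R with
      (D * (/ INR n - / INR (n + j)) + D * (/ INR (n + j) - / INR (S (n + j))))%R by ring.
    lra.
Qed.

Lemma Re_conj_mult_ge (g w : C) (k : R) : (0 < k)%R ->
  (Cmod (RtoC k * w - g) <= Cmod g / 2)%R -> (Cmod g * Cmod g / (2 * k) <= Re (Cconj g * w))%R.
Proof.
  intros Hk Hw. set (m := Cmod g) in *.
  assert (E1 : Re (Cconj g * (RtoC k * w)) = (k * Re (Cconj g * w))%R).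
  { replace (Cconj g * (RtoC k * w)) with (RtoC k * (Cconj g * w)) by ring. apply re_scal_l. }
  assert (E2 : Re (Cconj g * g) = (m * m)%R).
  { replace (Cconj g * g) with (g * Cconj g) by ring. rewrite <- Cmod2_conj. simpl. unfold m. ring. }
  assert (E3 : (Rabs (Re (Cconj g * (RtoC k * w - g))) <= m * (m / 2))%R).
  { eapply Rle_trans; [apply re_le_Cmod|]. rewrite Cmod_mult, Cmod_conj. fold m.
    apply Rmult_le_compat_l; [apply Cmod_ge_0|lra]. }
  replace (Cconj g * (RtoC k * w)) with (Cconj g * g + Cconj g * (RtoC k * w - g)) in E1 by ring.
  change (Re (Cconj g * g + Cconj g * (RtoC k * w - g)))
    with (Re (Cconj g * g) + Re (Cconj g * (RtoC k * w - g)))%R in E1.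
  rewrite E2 in E1. apply Rabs_le_between in E3.
  apply Rmult_le_reg_l with k; auto.
  replace (k * (m * m / (2 * k)))%R with (m * m / 2)%R by (field; lra). lra.
Qed.

(* If n T_n -> g != 0, the block of terms T_n, ..., T_(2n-1) contributes at least |g|/4
   in the direction of g, contradicting the Cauchy criterion. *)
Lemma INR_mult_term_cv_0_of_summable (T : nat -> C) (g s : C) :
  cvC (psum T) s -> cvC (fun n => RtoC (INR n) * T n) g -> g = 0.
Proof.
  intros Hs HT. destruct (Ceq_dec g 0) as [|Hg]; [auto|exfalso].
  pose proof (proj1 (Cmod_gt_0 g) Hg) as Hg0. set (m := Cmod g) in *.
  destruct (HT (m / 2)%R) as [K1 HK1]; [lra|].
  destruct (Hs (m / 8)%R) as [K2 HK2]; [lra|].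
  set (n := max 1 (max K1 K2)).
  assert (Hnpos : (0 < INR n)%R) by (apply lt_0_INR; unfold n; lia).
  assert (Hsum : forall j, (j <= n)%nat ->
     (INR j * (m * m / (4 * INR n)) <= Re (Cconj g * (psum T (n + j) - psum T n)))%R).
  { induction j; intros Hj.
    - rewrite Nat.add_0_r. replace (psum T n - psum T n) with (RtoC 0) by ring. simpl. lra.
    - rewrite Nat.add_succ_r. simpl psum.
      replace (Cconj g * (psum T (n + j) + T (n + j)%nat - psum T n)) with
        (Cconj g * (psum T (n + j) - psum T n) + Cconj g * T (n + j)%nat) by ring.
      specialize (IHj ltac:(lia)).
      assert (Hk : (0 < INR (n + j))%R) by (apply lt_0_INR; lia).
      pose proof (Re_conj_mult_ge g (T (n + j)%nat) _ Hk
                    (Rlt_le _ _ (HK1 (n + j)%nat ltac:(unfold n; lia)))) as Ht.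
      fold m in Ht.
      assert (m * m / (4 * INR n) <= m * m / (2 * INR (n + j)))%R.
      { assert (INR (n + j) <= 2 * INR n)%R
          by (rewrite plus_INR; assert (INR j <= INR n)%R by (apply le_INR; lia); lra).
        unfold Rdiv. apply Rmult_le_compat_l; [nra|]. apply Rinv_le_contravar; lra. }
      change (Re (Cconj g * (psum T (n + j) - psum T n) + Cconj g * T (n + j)%nat)) with
        (Re (Cconj g * (psum T (n + j) - psum T n)) + Re (Cconj g * T (n + j)%nat))%R.
      rewrite S_INR. lra. }
  specialize (Hsum n (le_n n)).
  replace (INR n * (m * m / (4 * INR n)))%R with (m * m / 4)%R in Hsum by (field; lra).
  assert (Hc : (Cmod (psum T (n + n) - psum T n) < m / 4)%R).
  { pose proof (HK2 (n + n)%nat ltac:(unfold n; lia)).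
    pose proof (HK2 n ltac:(unfold n; lia)) as H2. rewrite Cmod_sub_sym in H2.
    pose proof (Cmod_triangle_sub (psum T (n + n)) s (psum T n)). lra. }
  pose proof (re_le_Cmod (Cconj g * (psum T (n + n) - psum T n))) as Hr.
  rewrite Cmod_mult, Cmod_conj in Hr. fold m in Hr. apply Rabs_le_between in Hr.
  assert (m * Cmod (psum T (n + n) - psum T n) <= m * (m / 4))%R
    by (apply Rmult_le_compat_l; lra).
  nra.
Qed.

(** * The complex exponential near 0 *)

Lemma cos_ge_1_sub_sq (y : R) : (- 2 <= y <= 2)%R -> (1 - y * y / 2 <= cos y)%R.
Proof.
  intros [H1 H2]. destruct (pre_cos_bound y 0 H1 H2) as [H _].
  unfold cos_approx, cos_term in H. simpl in H. eapply Rle_trans; [|exact H]. right. field.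
Qed.

Lemma sin_Taylor_bounds (y : R) : (0 <= y <= 4)%R ->
  (y - y * y * y / 6 <= sin y <= y - y * y * y / 6 + y * y * y * y * y / 120)%R.
Proof.
  intros [H1 H2]. destruct (pre_sin_bound y 0 H1 H2) as [Ha Hb].
  unfold sin_approx, sin_term in Ha, Hb. simpl in Ha, Hb. split.
  - eapply Rle_trans; [|exact Ha]. right. field.
  - eapply Rle_trans; [exact Hb|]. right. field.
Qed.

Lemma sin_small_bounds (y : R) : (Rabs y <= 1/2)%R ->
  (Rabs (sin y) <= Rabs y /\ Rabs (sin y - y) <= y * y)%R.
Proof.
  assert (Hpos : forall y, (0 <= y <= 1/2)%R ->
            (Rabs (sin y) <= Rabs y /\ Rabs (sin y - y) <= y * y)%R).
  { intros z Hz. rewrite (Rabs_pos_eq z) by lra.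
    destruct (sin_Taylor_bounds z) as [A B]; [lra|].
    assert (0 <= z * z * z)%R by (apply Rmult_le_pos; [apply Rmult_le_pos|]; lra).
    assert (z * z <= 1)%R by nra.
    assert (z * z * z * z * z / 120 <= z * z * z / 6)%R by nra.
    assert (0 <= sin z)%R by nra.
    split; [rewrite Rabs_pos_eq; lra|]. rewrite Rabs_left1 by lra.
    assert (z * z * z <= z * z)%R by nra. lra. }
  intros H. destruct (Rle_or_lt 0 y) as [Hy|Hy].
  - rewrite Rabs_pos_eq in H by lra. apply Hpos. lra.
  - rewrite Rabs_left in H by lra. destruct (Hpos (- y)%R ltac:(lra)) as [A B].
    rewrite sin_neg, !Rabs_Ropp in A. rewrite sin_neg in B.
    replace (- sin y - - y)%R with (- (sin y - y))%R in B by ring.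
    rewrite Rabs_Ropp in B. split; [exact A|nra].
Qed.

Lemma exp_sub_1_bounds (x : R) : (Rabs x <= 1/2)%R -> (x <= exp x - 1 <= x + 2 * x * x)%R.
Proof.
  intros H. pose proof (exp_ineq1_le x). pose proof (exp_ineq1_le (- x)).
  assert (E : (exp x * exp (- x) = 1)%R) by (rewrite <- exp_plus, Rplus_opp_r; apply exp_0).
  pose proof (exp_pos x). apply Rabs_le_between in H as [Ha Hb]. split; [lra|].
  assert (exp x * (1 - x) <= 1)%R by (rewrite <- E; apply Rmult_le_compat_l; lra).
  nra.
Qed.

Definition Cexp (w : C) : C := ((exp (Re w) * cos (Im w))%R, (exp (Re w) * sin (Im w))%R).

Lemma Rcpow_Cexp (x : R) (z : C) : Rcpow x z = Cexp (z * RtoC (ln x)).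
Proof.
  unfold Rcpow, Cexp. destruct z as [a b]. unfold Cmult, RtoC, Re, Im. simpl.
  f_equal; f_equal; f_equal; ring.
Qed.

Lemma Cexp_plus (u v : C) : Cexp (u + v) = Cexp u * Cexp v.
Proof.
  destruct u as [a b]; destruct v as [c d]. unfold Cexp, Cplus, Cmult. simpl.
  rewrite exp_plus, cos_plus, sin_plus. apply injective_projections; simpl; ring.
Qed.

Lemma Cmod_Cexp (w : C) : Cmod (Cexp w) = exp (Re w).
Proof.
  unfold Cmod, Cexp. simpl. pose proof (sin2_cos2 (snd w)) as Hsc. unfold Rsqr in Hsc.
  match goal with |- sqrt ?E = _ => replace E with (exp (fst w) ^ 2)%R end.
  - apply sqrt_pow2. left; apply exp_pos.
  - transitivity (exp (fst w) ^ 2 * (sin (snd w) * sin (snd w) + cos (snd w) * cos (snd w)))%R.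
    + rewrite Hsc; ring.
    + unfold Re, Im. ring.
Qed.

Lemma Cexp_neq_0 (w : C) : Cexp w <> 0.
Proof.
  intro E. apply (f_equal Cmod) in E. rewrite Cmod_Cexp, Cmod_0 in E.
  pose proof (exp_pos (Re w)). lra.
Qed.

Lemma Re_Cexp_sub_1_bound (x y : R) : (Rabs x <= 1/2)%R -> (Rabs y <= 1/2)%R ->
  (Rabs (exp x * cos y - 1 - x) <= 2 * x * x + y * y)%R.
Proof.
  intros Hx Hy. destruct (exp_sub_1_bounds x Hx) as [E1 E2].
  assert (C1 : (1 - y * y / 2 <= cos y <= 1)%R).
  { split; [apply cos_ge_1_sub_sq; apply Rabs_le_between in Hy; lra|apply COS_bound]. }
  pose proof (exp_pos x). assert (exp x <= 2)%R by (apply Rabs_le_between in Hx; nra).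
  replace (exp x * cos y - 1 - x)%R with ((exp x - 1 - x) + exp x * (cos y - 1))%R by ring.
  eapply Rle_trans; [apply Rabs_triang|]. rewrite Rabs_mult.
  rewrite (Rabs_pos_eq (exp x)), (Rabs_pos_eq (exp x - 1 - x)), (Rabs_left1 (cos y - 1)) by lra.
  nra.
Qed.

Lemma Im_Cexp_sub_bound (x y : R) : (Rabs x <= 1/2)%R -> (Rabs y <= 1/2)%R ->
  (Rabs (exp x * sin y - y) <= x * x + 2 * y * y)%R.
Proof.
  intros Hx Hy. destruct (exp_sub_1_bounds x Hx) as [E1 E2].
  destruct (sin_small_bounds y Hy) as [S1 S2].
  assert (Hex : (Rabs (exp x - 1) <= 2 * Rabs x)%R).
  { apply Rabs_le_between in Hx. apply Rabs_le.
    destruct (Rle_or_lt 0 x); [rewrite Rabs_pos_eq by lra|rewrite Rabs_left by lra]; split; nra. }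
  assert (Hxy : (2 * Rabs x * Rabs y <= x * x + y * y)%R).
  { assert (Rabs x * Rabs x = x * x)%R by (rewrite <- Rabs_mult; apply Rabs_pos_eq; nra).
    assert (Rabs y * Rabs y = y * y)%R by (rewrite <- Rabs_mult; apply Rabs_pos_eq; nra).
    pose proof (Rle_0_sqr (Rabs x - Rabs y)). unfold Rsqr in *. nra. }
  replace (exp x * sin y - y)%R with ((exp x - 1) * sin y + (sin y - y))%R by ring.
  eapply Rle_trans; [apply Rabs_triang|]. rewrite Rabs_mult.
  pose proof (Rabs_pos (exp x - 1)). pose proof (Rabs_pos (sin y)). pose proof (Rabs_pos x).
  assert (Rabs (exp x - 1) * Rabs (sin y) <= 2 * Rabs x * Rabs y)%R.
  { apply Rmult_le_compat; lra. }
  lra.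
Qed.

Lemma Cexp_sub_1_sub_bound (w : C) : (Cmod w <= 1/2)%R ->
  (Cmod (Cexp w - 1 - w) <= 3 * (Cmod w * Cmod w))%R.
Proof.
  intros Hw. destruct w as [x y].
  pose proof (Rmax_Cmod (x, y)) as HM. simpl in HM.
  assert (Hx : (Rabs x <= 1/2)%R) by (pose proof (Rmax_l (Rabs x) (Rabs y)); lra).
  assert (Hy : (Rabs y <= 1/2)%R) by (pose proof (Rmax_r (Rabs x) (Rabs y)); lra).
  assert (Hm2 : (Cmod (x, y) * Cmod (x, y) = x * x + y * y)%R).
  { replace (Cmod (x, y) * Cmod (x, y))%R with (Cmod (x, y) ^ 2)%R by ring.
    rewrite Cmod2_alt. unfold Re, Im. simpl. ring. }
  rewrite Hm2. eapply Rle_trans; [apply Cmod_le_Rabs_Re_Im|]. unfold Cexp. simpl.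
  pose proof (Re_Cexp_sub_1_bound x y Hx Hy). pose proof (Im_Cexp_sub_bound x y Hx Hy).
  replace (exp x * cos y + - (1) + - x)%R with (exp x * cos y - 1 - x)%R by ring.
  replace (exp x * sin y + - 0 + - y)%R with (exp x * sin y - y)%R by ring. lra.
Qed.

(** * Gauss's product for the Gamma function *)

Lemma poch_S (a : C) (k : nat) : poch a (S k) = poch a k * (a + RtoC (INR k)).
Proof. reflexivity. Qed.

Lemma poch_S_l (z : C) (n : nat) : poch z (S n) = z * poch (z + 1) n.
Proof.
  induction n; [simpl; ring|].
  rewrite poch_S, IHn, poch_S, S_INR, RtoC_plus. ring.
Qed.

Lemma poch_neq_0 (z : C) : (forall n : nat, z + RtoC (INR n) <> 0) -> forall k, poch z k <> 0.
Proof. intros H k. induction k; [apply C1_nz|]. rewrite poch_S. now apply Cmult_neq_0. Qed.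

Lemma plus_INR_neq_0_of_poch (c : C) : (forall k, poch c k <> 0) ->
  forall n : nat, c + RtoC (INR n) <> 0.
Proof. intros H n E. apply (H (S n)). rewrite poch_S, E. ring. Qed.

Lemma neq_0_of_poch (c : C) : (forall k, poch c k <> 0) -> c <> 0.
Proof. intros H. pose proof (plus_INR_neq_0_of_poch c H 0) as H0. now rewrite Cplus_0_r in H0. Qed.

Lemma poch_plus_1_neq_0 (c : C) : (forall k, poch c k <> 0) -> forall k, poch (c + 1) k <> 0.
Proof. intros H k E. apply (H (S k)). rewrite poch_S_l, E. ring. Qed.

Lemma not_nonpos_int_plus_INR (z : C) : ~ nonpos_int z -> forall n : nat, z + RtoC (INR n) <> 0.
Proof.
  intros H n E. apply H. exists n. rewrite RtoC_opp.
  replace z with ((z + RtoC (INR n)) - RtoC (INR n)) by ring. rewrite E. ring.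
Qed.

Lemma not_nonpos_int_neq_0 (z : C) : ~ nonpos_int z -> z <> 0.
Proof. intros H. pose proof (not_nonpos_int_plus_INR z H 0) as H0. now rewrite Cplus_0_r in H0. Qed.

Lemma not_nonpos_int_plus_1 (z : C) : ~ nonpos_int z -> ~ nonpos_int (z + 1).
Proof.
  intros H [n En]. apply H. exists (S n). rewrite S_INR.
  replace z with (z + 1 - 1) by ring. rewrite En, !RtoC_opp, RtoC_plus. ring.
Qed.

Lemma Rcpow_neq_0 (x : R) (z : C) : Rcpow x z <> 0.
Proof. rewrite Rcpow_Cexp. apply Cexp_neq_0. Qed.

Lemma Rcpow_plus (x : R) (z w : C) : Rcpow x (z + w) = Rcpow x z * Rcpow x w.
Proof. rewrite !Rcpow_Cexp, <- Cexp_plus. f_equal. ring. Qed.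

Lemma Rcpow_1 (x : R) : (0 < x)%R -> Rcpow x 1 = RtoC x.
Proof.
  intros H. unfold Rcpow. simpl. rewrite Rmult_1_l, Rmult_0_l, exp_ln, cos_0, sin_0 by auto.
  unfold RtoC. f_equal; ring.
Qed.

Lemma ln_succ_sub_bounds (t : R) : (0 < t)%R -> (/ (t + 1) <= ln (t + 1) - ln t <= / t)%R.
Proof.
  intros Ht. split.
  - pose proof (exp_ineq1_le (ln (t / (t + 1)))) as H.
    rewrite exp_ln, ln_div in H by (try apply Rdiv_lt_0_compat; lra).
    assert (t / (t + 1) = 1 - / (t + 1))%R by (field; lra). lra.
  - pose proof (exp_ineq1_le (ln ((t + 1) / t))) as H.
    rewrite exp_ln, ln_div in H by (try apply Rdiv_lt_0_compat; lra).
    assert ((t + 1) / t = 1 + / t)%R by (field; lra). lra.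
Qed.

Definition gauss_seq_ratio (z : C) (n : nat) : C :=
  RtoC (INR (S n)) * Cexp (z * (RtoC (ln (INR (S n))) - RtoC (ln (INR n))))
  / (z + RtoC (INR (S n))).

Lemma gauss_seq_S (z : C) (n : nat) : (forall k : nat, z + RtoC (INR k) <> 0) ->
  gauss_seq z (S n) = gauss_seq z n * gauss_seq_ratio z n.
Proof.
  intros Hz. unfold gauss_seq, gauss_seq_ratio. rewrite (poch_S z (S n)), !Rcpow_Cexp.
  replace (z * RtoC (ln (INR (S n)))) with
    (z * RtoC (ln (INR n)) + z * (RtoC (ln (INR (S n))) - RtoC (ln (INR n)))) by ring.
  rewrite Cexp_plus. change (fact (S n)) with (S n * fact n)%nat.
  rewrite mult_INR, RtoC_mult.
  pose proof (poch_neq_0 z Hz (S n)). specialize (Hz (S n)). field. auto.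
Qed.

(* With L = ln(t+1) - ln t: (t+1) L - 1 is in [0, 1/t] and |z L| <= |z|/t. *)
Lemma gauss_seq_ratio_numerator_bound (z : C) (t : R) : (1 <= t)%R -> (2 * Cmod z <= t)%R ->
  let L := (ln (t + 1) - ln t)%R in
  (Cmod (RtoC (t + 1) * (Cexp (z * RtoC L) - 1 - z * RtoC L) + z * RtoC ((t + 1) * L - 1))
   <= (6 * (Cmod z * Cmod z) + Cmod z) / t)%R.
Proof.
  intros Ht Hzt L. destruct (ln_succ_sub_bounds t ltac:(lra)) as [HL1 HL2]. fold L in HL1, HL2.
  assert (HL0 : (0 <= L)%R) by (pose proof (Rinv_0_lt_compat (t + 1) ltac:(lra)); lra).
  set (m := Cmod z) in *. assert (Hm0 : (0 <= m)%R) by apply Cmod_ge_0.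
  assert (Hw : (Cmod (z * RtoC L) <= m / t)%R).
  { rewrite Cmod_mult, Cmod_R, Rabs_pos_eq by auto. apply Rmult_le_compat_l; auto. }
  assert (Hw2 : (Cmod (z * RtoC L) <= 1/2)%R).
  { eapply Rle_trans; [exact Hw|]. apply Rmult_le_reg_r with t; [lra|].
    unfold Rdiv. rewrite Rmult_assoc, Rinv_l by lra. lra. }
  pose proof (Cexp_sub_1_sub_bound _ Hw2) as HE.
  assert (HtL : (0 <= (t + 1) * L - 1 <= / t)%R).
  { split.
    - apply Rmult_le_compat_l with (r := (t + 1)%R) in HL1; [|lra].
      rewrite Rinv_r in HL1 by lra. lra.
    - apply Rmult_le_compat_l with (r := (t + 1)%R) in HL2; [|lra].
      replace ((t + 1) * / t)%R with (1 + / t)%R in HL2 by (field; lra). lra. }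
  eapply Rle_trans; [apply Cmod_triangle|]. rewrite !Cmod_mult, !Cmod_R.
  rewrite (Rabs_pos_eq (t + 1)), (Rabs_pos_eq ((t + 1) * L - 1)) by lra. fold m.
  assert (Hww : (Cmod (z * RtoC L) * Cmod (z * RtoC L) <= (m / t) * (m / t))%R).
  { pose proof (Cmod_ge_0 (z * RtoC L)). apply Rmult_le_compat; auto. }
  assert (Hmt : (0 <= m / t)%R) by (apply Rdiv_le_0_compat; lra).
  apply Rle_trans with ((t + 1) * (3 * ((m / t) * (m / t))) + m * / t)%R.
  { apply Rplus_le_compat; apply Rmult_le_compat_l; lra. }
  replace ((t + 1) * (3 * ((m / t) * (m / t))) + m * / t)%R with
    ((3 * (m * m) * (t + 1) + m * t) * / (t * t))%R by (field; lra).
  replace ((6 * (m * m) + m) / t)%R with ((6 * (m * m) * t + m * t) * / (t * t))%R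
    by (field; lra).
  apply Rmult_le_compat_r; [left; apply Rinv_0_lt_compat; nra|].
  assert (0 <= m * m)%R by nra. nra.
Qed.

Lemma gauss_seq_ratio_sub_1_bound (z : C) (n : nat) : (1 <= n)%nat -> (2 * Cmod z <= INR n)%R ->
  (Cmod (gauss_seq_ratio z n - 1) <= (2 * (6 * (Cmod z * Cmod z) + Cmod z)) / (INR n * INR (S n)))%R.
Proof.
  intros Hn Hzn. unfold gauss_seq_ratio. rewrite S_INR.
  set (t := INR n) in *. assert (Ht : (1 <= t)%R) by (apply (le_INR 1); lia).
  pose proof (gauss_seq_ratio_numerator_bound z t Ht Hzn) as Hnum. simpl in Hnum.
  set (L := (ln (t + 1) - ln t)%R) in *.
  rewrite <- RtoC_minus. fold L.
  assert (Hden : ((t + 1) / 2 <= Cmod (z + RtoC (t + 1)))%R).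
  { pose proof (Cmod_triangle_sub (RtoC (t + 1)) (z + RtoC (t + 1)) 0) as H.
    replace (RtoC (t + 1) - (z + RtoC (t + 1))) with (- z) in H by ring.
    rewrite !Cminus_0_r, Cmod_opp, Cmod_R, Rabs_pos_eq in H by lra. lra. }
  assert (Hdnz : z + RtoC (t + 1) <> 0) by (intro E; rewrite E, Cmod_0 in Hden; lra).
  replace (RtoC (t + 1) * Cexp (z * RtoC L) / (z + RtoC (t + 1)) - 1) with
    ((RtoC (t + 1) * (Cexp (z * RtoC L) - 1 - z * RtoC L) + z * RtoC ((t + 1) * L - 1))
     / (z + RtoC (t + 1))) by (rewrite RtoC_minus, RtoC_mult; field; auto).
  rewrite Cmod_div by auto.
  pose proof (Cmod_ge_0 (RtoC (t + 1) * (Cexp (z * RtoC L) - 1 - z * RtoC L)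
                         + z * RtoC ((t + 1) * L - 1))).
  apply Rle_trans with (((6 * (Cmod z * Cmod z) + Cmod z) / t) / ((t + 1) / 2))%R.
  - unfold Rdiv at 1. apply Rmult_le_compat; auto.
    + left. apply Rinv_0_lt_compat. lra.
    + apply Rinv_le_contravar; lra.
  - right. field. lra.
Qed.

Lemma gauss_seq_neq_0 (z : C) (n : nat) : (forall k : nat, z + RtoC (INR k) <> 0) ->
  gauss_seq z n <> 0.
Proof.
  intros Hz. unfold gauss_seq. apply Cdiv_neq_0; [|now apply poch_neq_0].
  apply Cmult_neq_0; [apply INR_fact_neq_0_C|apply Rcpow_neq_0].
Qed.

Lemma gauss_seq_cv (z : C) : ~ nonpos_int z -> exists L : C, L <> 0 /\ cvC (gauss_seq z) L.
Proof.
  intros Hnp. pose proof (not_nonpos_int_plus_INR z Hnp) as Hz.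
  destruct (INR_unbounded (2 * Cmod z)) as [N HN].
  apply (cvC_product_neq_0 (gauss_seq z) (gauss_seq_ratio z) (max 1 N)
           (2 * (6 * (Cmod z * Cmod z) + Cmod z))).
  - lia.
  - intros n _. now apply gauss_seq_S.
  - intros n Hn. apply gauss_seq_ratio_sub_1_bound; [lia|].
    eapply Rle_trans; [exact HN|]. apply le_INR. lia.
  - now apply gauss_seq_neq_0.
  - intros n _. unfold gauss_seq_ratio. apply Cdiv_neq_0; auto.
    apply Cmult_neq_0; [apply RtoC_neq_0, not_0_INR; lia|apply Cexp_neq_0].
Qed.

Lemma CGamma_of_cvC (z L : C) : cvC (gauss_seq z) L -> CGamma z = L.
Proof.
  intros H. unfold CGamma.
  rewrite (is_lim_seq_unique _ _ (cvC_Re _ _ H)), (is_lim_seq_unique _ _ (cvC_Im _ _ H)).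
  destruct L; reflexivity.
Qed.

Lemma CGamma_spec (z : C) : ~ nonpos_int z -> CGamma z <> 0 /\ cvC (gauss_seq z) (CGamma z).
Proof.
  intros H. destruct (gauss_seq_cv z H) as [L [HL HcL]]. now rewrite (CGamma_of_cvC z L HcL).
Qed.

Lemma CGamma_S (z : C) : ~ nonpos_int z -> ~ nonpos_int (z + 1) -> CGamma (z + 1) = z * CGamma z.
Proof.
  intros Hz Hz1. apply CGamma_of_cvC.
  pose proof (not_nonpos_int_plus_INR (z + 1) Hz1) as Hz1s.
  pose proof (not_nonpos_int_neq_0 z Hz) as Hz0.
  pose proof (cvC_mult _ _ _ _ (proj2 (CGamma_spec z Hz)) (cvC_INR_div (z + 1))) as H.
  rewrite Cmult_1_r in H. apply cvC_scal_l with (k := z) in H.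
  refine (cvC_ext_eventually _ _ _ 1 _ H). intros n Hn.
  unfold gauss_seq. rewrite (poch_S (z + 1) n), poch_S_l, Rcpow_plus, Rcpow_1
    by (apply lt_0_INR; lia).
  pose proof (poch_neq_0 (z + 1) Hz1s n). specialize (Hz1s n). field. auto.
Qed.

(** * Gauss's summation theorem *)

Definition gauss_term (A B c : C) (k : nat) : C :=
  poch A k * poch B k / (poch c k * RtoC (INR (fact k))).

Lemma gauss_term_0 (A B c : C) : gauss_term A B c 0 = 1.
Proof. unfold gauss_term. simpl. field. Qed.

Lemma gauss_term_S (A B c : C) (k : nat) : poch c (S k) <> 0 ->
  gauss_term A B c (S k) = gauss_term A B c k *
    ((A + RtoC (INR k)) * (B + RtoC (INR k)) / ((c + RtoC (INR k)) * (RtoC (INR k) + 1))).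
Proof.
  intros H. unfold gauss_term. rewrite !poch_S. rewrite poch_S in H.
  change (fact (S k)) with (S k * fact k)%nat.
  rewrite mult_INR, RtoC_mult, S_INR, RtoC_plus.
  pose proof (INR_fact_neq_0_C k). pose proof (INR_plus_1_neq_0_C k).
  assert (poch c k <> 0) by (intro E; apply H; rewrite E; ring).
  assert (c + RtoC (INR k) <> 0) by (intro E; apply H; rewrite E; ring).
  field. auto.
Qed.

Lemma gauss_term_plus_1 (A B c : C) (k : nat) : (forall k, poch c k <> 0) ->
  gauss_term A B (c + 1) k = gauss_term A B c k * (c / (c + RtoC (INR k))).
Proof.
  intros H. unfold gauss_term. pose proof (neq_0_of_poch c H).
  assert (E : poch (c + 1) k = poch c (S k) / c) by (rewrite poch_S_l; field; auto).
  rewrite E, poch_S. pose proof (H k). pose proof (plus_INR_neq_0_of_poch c H k).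
  pose proof (INR_fact_neq_0_C k). field. auto.
Qed.

Lemma gauss_contiguous_psum (A B c : C) (n : nat) : (forall k, poch c k <> 0) ->
  c * (c - A - B) * psum (gauss_term A B c) n - (c - A) * (c - B) * psum (gauss_term A B (c + 1)) n
  = - c * RtoC (INR n) * gauss_term A B c n.
Proof.
  intros H. induction n; [simpl; ring|].
  simpl psum. rewrite gauss_term_plus_1, (gauss_term_S A B c n) by auto.
  pose proof (plus_INR_neq_0_of_poch c H n). pose proof (INR_plus_1_neq_0_C n).
  rewrite S_INR, RtoC_plus.
  transitivity ((c * (c - A - B) * psum (gauss_term A B c) n
                 - (c - A) * (c - B) * psum (gauss_term A B (c + 1)) n)
    + (c * (c - A - B) * gauss_term A B c n
       - (c - A) * (c - B) * (gauss_term A B c n * (c / (c + RtoC (INR n)))))); [ring|].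
  rewrite IHn. field. auto.
Qed.

Lemma gauss_contiguous_cv (A B c Y : C) : (forall k, poch c k <> 0) -> c - A - B <> 0 ->
  cvC (fun n => RtoC (INR n) * gauss_term A B c n) 0 ->
  cvC (psum (gauss_term A B (c + 1))) Y ->
  cvC (psum (gauss_term A B c)) ((c - A) * (c - B) * Y / (c * (c - A - B))).
Proof.
  intros H Hab Ht HY. pose proof (neq_0_of_poch c H) as Hc.
  apply cvC_ext with (fun n => ((c - A) * (c - B) * psum (gauss_term A B (c + 1)) n
                               - c * (RtoC (INR n) * gauss_term A B c n)) / (c * (c - A - B))).
  { intros n. pose proof (gauss_contiguous_psum A B c n H) as E.
    replace (psum (gauss_term A B c) n) with
      (c * (c - A - B) * psum (gauss_term A B c) n / (c * (c - A - B))) by (field; auto).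
    assert (E' : c * (c - A - B) * psum (gauss_term A B c) n =
      (c - A) * (c - B) * psum (gauss_term A B (c + 1)) n - c * RtoC (INR n) * gauss_term A B c n).
    { transitivity ((c * (c - A - B) * psum (gauss_term A B c) n
        - (c - A) * (c - B) * psum (gauss_term A B (c + 1)) n)
        + (c - A) * (c - B) * psum (gauss_term A B (c + 1)) n); [ring|].
      rewrite E. ring. }
    rewrite E'. field. auto. }
  replace ((c - A) * (c - B) * Y / (c * (c - A - B))) with
    (((c - A) * (c - B) * Y - c * 0) * / (c * (c - A - B))) by (field; auto).
  apply cvC_mult; [|apply cvC_const]. apply cvC_minus; now apply cvC_scal_l.
Qed.

Lemma cvC_div_plus_INR (c : C) : (forall k, poch c k <> 0) ->
  cvC (fun n => c / (c + RtoC (INR n))) 0.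
Proof.
  intros H.
  pose proof (cvC_mult _ _ _ _ (cvC_scal_l c _ _ cvC_inv_INR) (cvC_INR_div c)) as Hl.
  rewrite Cmult_0_r, Cmult_0_l in Hl.
  refine (cvC_ext_eventually _ _ _ 1 _ Hl). intros n Hn.
  assert (RtoC (INR n) <> 0) by (apply RtoC_neq_0, not_0_INR; lia).
  pose proof (plus_INR_neq_0_of_poch c H n). field. auto.
Qed.

Lemma INR_mult_gauss_term_plus_1_cv_0 (A B c : C) : (forall k, poch c k <> 0) ->
  cvC (fun n => RtoC (INR n) * gauss_term A B c n) 0 ->
  cvC (fun n => RtoC (INR n) * gauss_term A B (c + 1) n) 0.
Proof.
  intros H Ht. pose proof (cvC_mult _ _ _ _ Ht (cvC_div_plus_INR c H)) as Hl.
  rewrite Cmult_0_l in Hl. refine (cvC_ext _ _ _ _ Hl). intros n.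
  rewrite gauss_term_plus_1 by auto. ring.
Qed.

Lemma plus_INR_plus_1 (c : C) (m : nat) : c + RtoC (INR (S m)) = c + RtoC (INR m) + 1.
Proof. rewrite S_INR, RtoC_plus. ring. Qed.

Lemma gauss_term_shift_hyps (A B c : C) : (forall k, poch c k <> 0) ->
  cvC (fun n => RtoC (INR n) * gauss_term A B c n) 0 ->
  forall m : nat, (forall k, poch (c + RtoC (INR m)) k <> 0) /\
    cvC (fun n => RtoC (INR n) * gauss_term A B (c + RtoC (INR m)) n) 0.
Proof.
  intros H Ht m. induction m as [|m [H1 H2]]; [simpl; now rewrite Cplus_0_r|].
  rewrite plus_INR_plus_1.
  split; [now apply poch_plus_1_neq_0|now apply INR_mult_gauss_term_plus_1_cv_0].
Qed.

Definition gauss_poch_ratio (A B c : C) (m : nat) : C :=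
  poch (c - A) m * poch (c - B) m / (poch c m * poch (c - A - B) m).

Lemma gauss_poch_ratio_S (A B c : C) (m : nat) :
  (forall k, poch c k <> 0) -> (forall k, poch (c - A - B) k <> 0) ->
  gauss_poch_ratio A B c (S m) = gauss_poch_ratio A B c m *
    ((c + RtoC (INR m) - A) * (c + RtoC (INR m) - B)
     / ((c + RtoC (INR m)) * (c + RtoC (INR m) - A - B))).
Proof.
  intros H1 H2. unfold gauss_poch_ratio. rewrite !poch_S.
  pose proof (H1 m). pose proof (H2 m).
  pose proof (plus_INR_neq_0_of_poch c H1 m). pose proof (plus_INR_neq_0_of_poch _ H2 m).
  replace (c + RtoC (INR m) - A - B) with (c - A - B + RtoC (INR m)) by ring.
  field. auto.
Qed.

Lemma gauss_iterated_contiguous_cv (A B c : C) : (forall k, poch c k <> 0) ->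
  (forall k, poch (c - A - B) k <> 0) ->
  cvC (fun n => RtoC (INR n) * gauss_term A B c n) 0 ->
  forall (m : nat) (Y : C), cvC (psum (gauss_term A B (c + RtoC (INR m)))) Y ->
    cvC (psum (gauss_term A B c)) (gauss_poch_ratio A B c m * Y).
Proof.
  intros H Hab Ht m. induction m as [|m IHm]; intros Y HY.
  - unfold gauss_poch_ratio. simpl in *. rewrite Cplus_0_r in HY.
    replace (1 * 1 / (1 * 1) * Y) with Y by (field; apply C1_nz). exact HY.
  - destruct (gauss_term_shift_hyps A B c H Ht m) as [H1 H2].
    rewrite plus_INR_plus_1 in HY.
    assert (Hm : c + RtoC (INR m) - A - B <> 0).
    { pose proof (plus_INR_neq_0_of_poch _ Hab m) as Hm. contradict Hm. rewrite <- Hm. ring. }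
    specialize (IHm _ (gauss_contiguous_cv _ _ _ Y H1 Hm H2 HY)).
    rewrite gauss_poch_ratio_S by auto.
    pose proof (plus_INR_neq_0_of_poch c H m).
    replace (gauss_poch_ratio A B c m * ((c + RtoC (INR m) - A) * (c + RtoC (INR m) - B)
       / ((c + RtoC (INR m)) * (c + RtoC (INR m) - A - B))) * Y)
    with (gauss_poch_ratio A B c m * ((c + RtoC (INR m) - A) * (c + RtoC (INR m) - B) * Y
       / ((c + RtoC (INR m)) * (c + RtoC (INR m) - A - B)))) by (field; auto).
    exact IHm.
Qed.

Definition gamma_ratio (A B c : C) : C :=
  CGamma c * CGamma (c - A - B) / (CGamma (c - A) * CGamma (c - B)).

(* In the quotient of Gauss products the factorials cancel, and so do the powers n^s
   because c + (c-A-B) = (c-A) + (c-B). *)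
Lemma gauss_poch_ratio_cv (A B c : C) : ~ nonpos_int c -> ~ nonpos_int (c - A - B) ->
  ~ nonpos_int (c - A) -> ~ nonpos_int (c - B) -> cvC (gauss_poch_ratio A B c) (gamma_ratio A B c).
Proof.
  intros H1 H2 H3 H4.
  destruct (CGamma_spec _ H1) as [G1 L1]. destruct (CGamma_spec _ H2) as [G2 L2].
  destruct (CGamma_spec _ H3) as [G3 L3]. destruct (CGamma_spec _ H4) as [G4 L4].
  pose proof (poch_neq_0 _ (not_nonpos_int_plus_INR _ H1)) as P1.
  pose proof (poch_neq_0 _ (not_nonpos_int_plus_INR _ H2)) as P2.
  pose proof (poch_neq_0 _ (not_nonpos_int_plus_INR _ H3)) as P3.
  pose proof (poch_neq_0 _ (not_nonpos_int_plus_INR _ H4)) as P4.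
  apply cvC_of_shift.
  assert (Hl : cvC (fun n => gauss_seq c n * gauss_seq (c - A - B) n
                            * / (gauss_seq (c - A) n * gauss_seq (c - B) n)) (gamma_ratio A B c)).
  { apply cvC_mult; [now apply cvC_mult|].
    apply cvC_inv; [now apply Cmult_neq_0|now apply cvC_mult]. }
  refine (cvC_ext _ _ _ _ Hl). intros n. unfold gauss_poch_ratio, gauss_seq.
  assert (Ec : Rcpow (INR n) c =
            Rcpow (INR n) (c - A) * Rcpow (INR n) (c - B) / Rcpow (INR n) (c - A - B)).
  { rewrite <- Rcpow_plus. replace (c - A + (c - B)) with (c + (c - A - B)) by ring.
    rewrite Rcpow_plus. field. apply Rcpow_neq_0. }
  rewrite Ec.
  pose proof (Rcpow_neq_0 (INR n) (c - A)). pose proof (Rcpow_neq_0 (INR n) (c - B)).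
  pose proof (Rcpow_neq_0 (INR n) (c - A - B)). pose proof (INR_fact_neq_0_C n).
  pose proof (P1 (S n)). pose proof (P2 (S n)). pose proof (P3 (S n)). pose proof (P4 (S n)).
  field. repeat split; auto.
Qed.

(* For Re c large, F(A,B;c) - 1 is small: the terms are dominated by the real recursion. *)
Fixpoint gauss_majorant (al be N : R) (k : nat) : R :=
  match k with
  | O => 1%R
  | S k' => (gauss_majorant al be N k' *
              ((al + INR k') * (be + INR k') / ((N + INR k') * (INR k' + 1))))%R
  end.

Lemma Re_plus_le_Cmod (c : C) (r : R) : (Re c + r <= Cmod (c + RtoC r))%R.
Proof. eapply Rle_trans; [|apply re_le_Cmod]. simpl. unfold Re. apply Rle_abs. Qed.

Lemma gauss_majorant_ge_0 (al be N : R) (k : nat) : (0 <= al)%R -> (0 <= be)%R -> (0 < N)%R ->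
  (0 <= gauss_majorant al be N k)%R.
Proof.
  intros Ha Hb HN. induction k; simpl; [lra|].
  apply Rmult_le_pos; auto. pose proof (pos_INR k).
  apply Rdiv_le_0_compat; [apply Rmult_le_pos|apply Rmult_lt_0_compat]; lra.
Qed.

Lemma gauss_term_le_majorant (A B c : C) (k : nat) : (0 < Re c)%R ->
  (Cmod (gauss_term A B c k) <= gauss_majorant (Cmod A) (Cmod B) (Re c) k)%R.
Proof.
  intros Hc.
  assert (Hcn : forall n : nat, c + RtoC (INR n) <> 0).
  { intros n E. pose proof (Re_plus_le_Cmod c (INR n)) as H. rewrite E, Cmod_0 in H.
    pose proof (pos_INR n). lra. }
  induction k; [rewrite gauss_term_0, Cmod_1; simpl; lra|].
  rewrite gauss_term_S by (now apply poch_neq_0). simpl gauss_majorant. rewrite Cmod_mult.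
  pose proof (pos_INR k).
  apply Rmult_le_compat; [apply Cmod_ge_0|apply Cmod_ge_0|auto|].
  rewrite Cmod_div by (apply Cmult_neq_0; [auto|apply INR_plus_1_neq_0_C]).
  rewrite !Cmod_mult, <- RtoC_plus, (Cmod_R (INR k + 1)), Rabs_pos_eq by lra.
  assert (HA : (Cmod (A + RtoC (INR k)) <= Cmod A + INR k)%R).
  { eapply Rle_trans; [apply Cmod_triangle|]. rewrite Cmod_R, Rabs_pos_eq; lra. }
  assert (HB : (Cmod (B + RtoC (INR k)) <= Cmod B + INR k)%R).
  { eapply Rle_trans; [apply Cmod_triangle|]. rewrite Cmod_R, Rabs_pos_eq; lra. }
  pose proof (Re_plus_le_Cmod c (INR k)) as HC.
  unfold Rdiv. apply Rmult_le_compat.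
  - apply Rmult_le_pos; apply Cmod_ge_0.
  - left. apply Rinv_0_lt_compat. apply Rmult_lt_0_compat; lra.
  - apply Rmult_le_compat; auto; apply Cmod_ge_0.
  - apply Rinv_le_contravar; [apply Rmult_lt_0_compat; lra|]. apply Rmult_le_compat_r; lra.
Qed.

Lemma gauss_majorant_ratio_le (al be N k : R) : (0 <= al)%R -> (0 <= be)%R -> (1 <= k)%R ->
  (3 * al * be + 2 * al + 2 * be + 1 <= N)%R ->
  ((al + k) * (be + k) * (k + 2) <= k * ((N + k) * (k + 1)))%R.
Proof.
  intros Ha Hb Hk HN.
  assert (E : (k * ((N + k) * (k + 1)) - (al + k) * (be + k) * (k + 2) =
     (N - 1 - al - be) * (k * k) + (N - al * be - 2 * al - 2 * be) * k - 2 * al * be)%R) by ring.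
  assert (0 <= al * be)%R by (apply Rmult_le_pos; auto).
  assert (H1 : (0 <= N - 1 - al - be)%R) by lra.
  assert (((N - 1 - al - be) * k <= (N - 1 - al - be) * (k * k))%R)
    by (apply Rmult_le_compat_l; nra).
  assert ((2 * al * be <= (2 * al * be) * k)%R) by nra.
  assert (0 <= (N - 1 - al - be + N - al * be - 2 * al - 2 * be - 2 * al * be) * k)%R
    by (apply Rmult_le_pos; lra).
  nra.
Qed.

Lemma gauss_majorant_le_harmonic (al be N : R) (j : nat) : (0 <= al)%R -> (0 <= be)%R ->
  (0 < N)%R -> (3 * al * be + 2 * al + 2 * be + 1 <= N)%R ->
  (gauss_majorant al be N (S j) <= (2 * al * be / N) * (/ INR (S j) - / INR (S (S j))))%R.
Proof.
  intros Ha Hb HN Hc. induction j; [simpl; right; field; lra|].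
  change (gauss_majorant al be N (S (S j))) with (gauss_majorant al be N (S j) *
    ((al + INR (S j)) * (be + INR (S j)) / ((N + INR (S j)) * (INR (S j) + 1))))%R.
  set (k := INR (S j)) in *.
  assert (Hk : (1 <= k)%R) by (unfold k; rewrite S_INR; pose proof (pos_INR j); lra).
  replace (INR (S (S j))) with (k + 1)%R in * by (unfold k; rewrite (S_INR (S j)); ring).
  replace (INR (S (S (S j)))) with (k + 2)%R by (unfold k; rewrite !S_INR; ring).
  pose proof (gauss_majorant_ge_0 al be N (S j) Ha Hb HN).
  assert (Hq : ((al + k) * (be + k) / ((N + k) * (k + 1)) <= k / (k + 2))%R).
  { apply Rmult_le_reg_r with ((N + k) * (k + 1) * (k + 2))%R.
    { apply Rmult_lt_0_compat; [apply Rmult_lt_0_compat|]; lra. }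
    replace ((al + k) * (be + k) / ((N + k) * (k + 1)) * ((N + k) * (k + 1) * (k + 2)))%R
      with ((al + k) * (be + k) * (k + 2))%R by (field; lra).
    replace (k / (k + 2) * ((N + k) * (k + 1) * (k + 2)))%R with (k * ((N + k) * (k + 1)))%R
      by (field; lra).
    now apply gauss_majorant_ratio_le. }
  assert (Hq0 : (0 <= (al + k) * (be + k) / ((N + k) * (k + 1)))%R).
  { apply Rdiv_le_0_compat; [apply Rmult_le_pos|apply Rmult_lt_0_compat]; lra. }
  apply Rle_trans with ((2 * al * be / N) * (/ k - / (k + 1)) * (k / (k + 2)))%R.
  - now apply Rmult_le_compat.
  - right. field. lra.
Qed.

Lemma gauss_sum_near_1 (A B c : C) :
  (3 * Cmod A * Cmod B + 2 * Cmod A + 2 * Cmod B + 1 <= Re c)%R ->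
  exists Y : C, cvC (psum (gauss_term A B c)) Y /\
    (Cmod (Y - 1) <= 2 * Cmod A * Cmod B / Re c)%R.
Proof.
  intros Hbig. set (D := (2 * Cmod A * Cmod B / Re c)%R).
  pose proof (Cmod_ge_0 A). pose proof (Cmod_ge_0 B).
  assert (HN : (0 < Re c)%R) by (assert (0 <= Cmod A * Cmod B)%R by nra; lra).
  assert (HD : (0 <= D)%R) by (apply Rdiv_le_0_compat; auto; nra).
  assert (Hc := psum_harmonic_increment (gauss_term A B c) D).
  lapply Hc; clear Hc.
  2:{ intros [|p] Hk; [lia|]. eapply Rle_trans; [now apply gauss_term_le_majorant|].
      now apply gauss_majorant_le_harmonic. }
  intros Hc.
  destruct (cvC_of_harmonic_Cauchy (psum (gauss_term A B c)) D 1 (le_n 1) HD Hc) as [Y HY].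
  exists Y. split; auto.
  apply (cvC_limit_le _ _ _ _ 1 HY). intros n Hn.
  replace n with (1 + (n - 1))%nat by lia.
  pose proof (Hc 1%nat (n - 1)%nat (le_n 1)) as H1.
  replace (psum (gauss_term A B c) 1) with (RtoC 1) in H1
    by (simpl; rewrite gauss_term_0; ring).
  eapply Rle_trans; [exact H1|]. change (INR 1) with 1%R. rewrite Rinv_1.
  assert (0 < INR (1 + (n - 1)))%R by (apply lt_0_INR; lia).
  assert (0 < / INR (1 + (n - 1)))%R by (apply Rinv_0_lt_compat; lra).
  nra.
Qed.

(* The hypothesis n t_n -> 0 kills the boundary terms of the iterated contiguous relation. *)
Lemma gauss_summation (A B c : C) : (forall k, poch c k <> 0) -> ~ nonpos_int (c - A - B) ->
  ~ nonpos_int (c - A) -> ~ nonpos_int (c - B) ->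
  cvC (fun n => RtoC (INR n) * gauss_term A B c n) 0 ->
  cvC (psum (gauss_term A B c)) (gamma_ratio A B c).
Proof.
  intros Hc Habc Hac Hbc Ht.
  assert (Hnc : ~ nonpos_int c).
  { intros [n En]. apply (plus_INR_neq_0_of_poch c Hc n). rewrite En, RtoC_opp. ring. }
  pose proof (poch_neq_0 _ (not_nonpos_int_plus_INR _ Habc)) as Hab.
  pose proof (gauss_poch_ratio_cv A B c Hnc Habc Hac Hbc) as HP.
  set (al := Cmod A). set (be := Cmod B).
  assert (Hal : (0 <= al)%R) by apply Cmod_ge_0. assert (Hbe : (0 <= be)%R) by apply Cmod_ge_0.
  destruct (INR_unbounded (3 * al * be + 2 * al + 2 * be + 1 - Re c)) as [m0 Hm0].
  assert (Hm : forall m, (m0 <= m)%nat -> exists Y : C,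
     cvC (psum (gauss_term A B c)) (gauss_poch_ratio A B c m * Y) /\
     (Cmod (Y - 1) <= 2 * al * be / (Re c + INR m))%R).
  { intros m Hmm.
    assert (HR : Re (c + RtoC (INR m)) = (Re c + INR m)%R) by (simpl; unfold Re; simpl; ring).
    assert (Hmm' : (INR m0 <= INR m)%R) by (apply le_INR; auto).
    destruct (gauss_sum_near_1 A B (c + RtoC (INR m))) as [Y [HY HY1]]; [rewrite HR; fold al be; lra|].
    exists Y. rewrite HR in HY1. split; [now apply gauss_iterated_contiguous_cv|auto]. }
  destruct (Hm m0 (le_n m0)) as [Y0 [HX _]].
  destruct (cvC_bounded _ _ HP) as [N1 HN1].
  enough (HPX : cvC (gauss_poch_ratio A B c) (gauss_poch_ratio A B c m0 * Y0))
    by (now rewrite <- (cvC_unique _ _ _ HPX HP)).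
  apply (cvC_dominated _ _
    (fun m => ((Cmod (gamma_ratio A B c) + 1) * (2 * al * be) / (Re c + INR m))%R) (max N1 m0)).
  - apply Rdiv_plus_INR_cv_0. pose proof (Cmod_ge_0 (gamma_ratio A B c)).
    apply Rmult_le_pos; [lra|]. assert (0 <= al * be)%R by nra. lra.
  - intros m Hmm. destruct (Hm m ltac:(lia)) as [Y [HY HY1]].
    rewrite (cvC_unique _ _ _ HX HY).
    replace (gauss_poch_ratio A B c m - gauss_poch_ratio A B c m * Y)
      with (gauss_poch_ratio A B c m * (1 - Y)) by ring.
    rewrite Cmod_mult, Cmod_sub_sym. specialize (HN1 m ltac:(lia)).
    unfold Rdiv in *. rewrite Rmult_assoc.
    apply Rmult_le_compat; [apply Cmod_ge_0|apply Cmod_ge_0|auto|exact HY1].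
Qed.

(** * The three moments of the Gauss series *)

Lemma gauss_term_S_mult (A B c : C) (k : nat) : (forall k, poch c k <> 0) ->
  gauss_term A B c (S k) * ((c + RtoC (INR k)) * (RtoC (INR k) + 1))
  = gauss_term A B c k * ((A + RtoC (INR k)) * (B + RtoC (INR k))).
Proof.
  intros Hc. rewrite gauss_term_S by auto.
  pose proof (plus_INR_neq_0_of_poch _ Hc k). pose proof (INR_plus_1_neq_0_C k). field. auto.
Qed.

Section Moments.

Variables (a b c : C).
Hypothesis Hc : forall k : nat, poch (c + 1) k <> 0.

Let u := gauss_term a b (c + 1).

Lemma gauss_first_moment_psum (n : nat) :
  (c - a - b) * psum (fun k => RtoC (INR k) * u k) n - a * b * psum u n
  = - RtoC (INR n) * (c + RtoC (INR n)) * u n.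
Proof.
  induction n; [simpl; ring|].
  simpl psum. pose proof (gauss_term_S_mult a b (c + 1) n Hc) as E. fold u in E.
  transitivity (((c - a - b) * psum (fun k => RtoC (INR k) * u k) n - a * b * psum u n)
    + ((c - a - b) * RtoC (INR n) * u n - a * b * u n)); [ring|].
  rewrite IHn, S_INR, RtoC_plus.
  transitivity (- RtoC (INR n) * (c + RtoC (INR n)) * u n + (c - a - b) * RtoC (INR n) * u n
    - a * b * u n); [ring|].
  transitivity (- (u n * ((a + RtoC (INR n)) * (b + RtoC (INR n))))); [ring|].
  rewrite <- E. ring.
Qed.

Lemma gauss_second_moment_psum (n : nat) :
  (c - a - b - 1) * psum (fun k => RtoC (INR k) * (RtoC (INR k) - 1) * u k) n
  - (1 + a) * (1 + b) * psum (fun k => RtoC (INR k) * u k) n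
  = - (RtoC (INR n) - 1) * RtoC (INR n) * (c + RtoC (INR n)) * u n.
Proof.
  induction n; [simpl; ring|].
  simpl psum. pose proof (gauss_term_S_mult a b (c + 1) n Hc) as E. fold u in E.
  transitivity (((c - a - b - 1) * psum (fun k => RtoC (INR k) * (RtoC (INR k) - 1) * u k) n
    - (1 + a) * (1 + b) * psum (fun k => RtoC (INR k) * u k) n)
    + ((c - a - b - 1) * RtoC (INR n) * (RtoC (INR n) - 1) * u n
       - (1 + a) * (1 + b) * RtoC (INR n) * u n)); [ring|].
  rewrite IHn, S_INR, RtoC_plus.
  transitivity (- RtoC (INR n) * (u n * ((a + RtoC (INR n)) * (b + RtoC (INR n))))); [ring|].
  rewrite <- E. ring.
Qed.

Lemma gauss_first_moment_cv (L : C) : c - a - b <> 0 ->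
  cvC (psum u) L -> cvC (fun n => RtoC (INR n) * (c + RtoC (INR n)) * u n) 0 ->
  cvC (psum (fun k => RtoC (INR k) * u k)) (a * b * L / (c - a - b)).
Proof.
  intros Hab HU Hb.
  pose proof (cvC_mult _ _ _ _ (cvC_minus _ _ _ _ (cvC_scal_l (a * b) _ _ HU) Hb)
                (cvC_const (/ (c - a - b)))) as Hl.
  replace ((a * b * L - 0) * / (c - a - b)) with (a * b * L / (c - a - b)) in Hl by (field; auto).
  refine (cvC_ext _ _ _ _ Hl). intros n. pose proof gauss_first_moment_psum n as E.
  replace (psum (fun k => RtoC (INR k) * u k) n) with
    ((c - a - b) * psum (fun k => RtoC (INR k) * u k) n / (c - a - b)) by (field; auto).
  transitivity (((c - a - b) * psum (fun k => RtoC (INR k) * u k) n - a * b * psum u n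
                 + a * b * psum u n) / (c - a - b)); [|f_equal; ring].
  rewrite E. field. auto.
Qed.

Lemma gauss_second_moment_boundary_cv (V W : C) :
  cvC (psum (fun k => RtoC (INR k) * u k)) V ->
  cvC (psum (fun k => RtoC (INR k) * (RtoC (INR k) - 1) * u k)) W ->
  cvC (fun n => (RtoC (INR n) - 1) * RtoC (INR n) * (c + RtoC (INR n)) * u n)
      ((1 + a) * (1 + b) * V - (c - a - b - 1) * W).
Proof.
  intros HV HW.
  refine (cvC_ext _ _ _ _ (cvC_minus _ _ _ _ (cvC_scal_l _ _ _ HV) (cvC_scal_l _ _ _ HW))).
  intros n. pose proof (gauss_second_moment_psum n) as E.
  transitivity (- ((c - a - b - 1) * psum (fun k => RtoC (INR k) * (RtoC (INR k) - 1) * u k) n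
    - (1 + a) * (1 + b) * psum (fun k => RtoC (INR k) * u k) n)); [ring|].
  rewrite E. ring.
Qed.

End Moments.

Lemma gamma_ratio_plus_1 (A B c : C) : ~ nonpos_int (c - A - B) ->
  ~ nonpos_int (c - A + 1) -> ~ nonpos_int (c - B + 1) ->
  gamma_ratio A B (c + 1) = (c - A - B) *
    (CGamma (c + 1) * CGamma (c - A - B) / (CGamma (c - A + 1) * CGamma (c - B + 1))).
Proof.
  intros Hab Ha Hb. unfold gamma_ratio.
  replace (c + 1 - A - B) with (c - A - B + 1) by ring.
  replace (c + 1 - A) with (c - A + 1) by ring. replace (c + 1 - B) with (c - B + 1) by ring.
  rewrite (CGamma_S (c - A - B)) by (try apply not_nonpos_int_plus_1; auto).
  pose proof (proj1 (CGamma_spec _ Ha)). pose proof (proj1 (CGamma_spec _ Hb)).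
  field. auto.
Qed.

(** * The 3F2 series *)

Lemma poch_plus_2 (d : C) (k : nat) :
  poch (d + 2) k * (d * (d + 1)) = poch d k * ((d + RtoC (INR k)) * (d + RtoC (INR k) + 1)).
Proof.
  induction k; [simpl; ring|].
  rewrite !poch_S, S_INR, RtoC_plus.
  transitivity ((poch (d + 2) k * (d * (d + 1))) * (d + 2 + RtoC (INR k))); [ring|].
  rewrite IHk. ring.
Qed.

Section F32.

Variables (a b c d : C).
Hypothesis Hc : forall k : nat, poch (c + 1) k <> 0.
Hypothesis Hd : forall k : nat, poch d k <> 0.
Hypothesis Hd0 : d <> 0.
Hypothesis Hd1 : d + 1 <> 0.

Let u := gauss_term a b (c + 1).
Let T := F32_term a b (d + 2) (c + 1) d 1.

Lemma F32_term_eq (k : nat) :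
  T k = u k * ((d + RtoC (INR k)) * (d + RtoC (INR k) + 1) / (d * (d + 1))).
Proof.
  unfold T, u, F32_term, gauss_term. rewrite Cpow_1_l.
  replace (poch (d + 2) k) with (poch (d + 2) k * (d * (d + 1)) / (d * (d + 1))) by (field; auto).
  rewrite poch_plus_2. pose proof (Hc k). pose proof (Hd k). pose proof (INR_fact_neq_0_C k).
  field. auto.
Qed.

Lemma F32_psum_moments (n : nat) :
  d * (d + 1) * psum T n = d * (d + 1) * psum u n
    + (2 * d + 2) * psum (fun k => RtoC (INR k) * u k) n
    + psum (fun k => RtoC (INR k) * (RtoC (INR k) - 1) * u k) n.
Proof.
  induction n; [simpl; ring|].
  simpl psum. rewrite F32_term_eq.
  transitivity (d * (d + 1) * psum T n + u n * ((d + RtoC (INR n)) * (d + RtoC (INR n) + 1)));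
    [field; auto|].
  rewrite IHn. ring.
Qed.

Variable s : C.
Hypothesis Hs : cvC (psum T) s.

Lemma INR_sq_mult_gauss_term_cv_0 : cvC (fun n => RtoC (INR n) * RtoC (INR n) * u n) 0.
Proof.
  assert (HT0 : cvC T 0).
  { apply (cvC_ext (fun n => psum T (S n) - psum T n)); [intros n; simpl; ring|].
    replace (RtoC 0) with (s - s) by ring. apply cvC_minus; [now apply cvC_shift|auto]. }
  pose proof (plus_INR_neq_0_of_poch d Hd) as Hdn.
  pose proof (cvC_mult _ _ _ _ (cvC_mult _ _ _ _ (cvC_scal_l (d * (d + 1)) _ _ HT0)
                (cvC_INR_div d)) (cvC_INR_div (d + 1))) as Hl.
  rewrite Cmult_0_r, !Cmult_0_l in Hl.
  refine (cvC_ext _ _ _ _ Hl). intros n. rewrite F32_term_eq.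
  pose proof (Hdn n). pose proof (plus_INR_neq_0_of_poch _ (poch_plus_1_neq_0 _ Hd) n).
  replace (d + RtoC (INR n) + 1) with (d + 1 + RtoC (INR n)) by ring.
  field. auto.
Qed.

Lemma INR_mult_gauss_term_cv_0 : cvC (fun n => RtoC (INR n) * u n) 0.
Proof.
  pose proof (cvC_mult _ _ _ _ INR_sq_mult_gauss_term_cv_0 cvC_inv_INR) as Hl.
  rewrite Cmult_0_l in Hl. refine (cvC_ext_eventually _ _ _ 1 _ Hl). intros n Hn.
  assert (RtoC (INR n) <> 0) by (apply RtoC_neq_0, not_0_INR; lia). field. auto.
Qed.

Lemma gauss_first_moment_boundary_cv_0 :
  cvC (fun n => RtoC (INR n) * (c + RtoC (INR n)) * u n) 0.
Proof.
  pose proof (cvC_plus _ _ _ _ INR_sq_mult_gauss_term_cv_0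
                (cvC_scal_l c _ _ INR_mult_gauss_term_cv_0)) as Hl.
  rewrite Cmult_0_r, Cplus_0_r in Hl. refine (cvC_ext _ _ _ _ Hl). intros n. ring.
Qed.

(* A nonzero limit beta of the boundary term would make n T_n tend to beta / (d(d+1)). *)
Lemma gauss_second_moment_boundary_eq_0 (beta : C) :
  cvC (fun n => (RtoC (INR n) - 1) * RtoC (INR n) * (c + RtoC (INR n)) * u n) beta ->
  beta = 0.
Proof.
  intros Hb. pose proof (INR_mult_term_cv_0_of_summable T (beta / (d * (d + 1))) s Hs) as H.
  enough (beta / (d * (d + 1)) = 0) as E.
  { apply (f_equal (fun z => z * (d * (d + 1)))) in E. rewrite Cmult_0_l in E.
    rewrite <- E. field. auto. }
  apply H. clear H.
  pose proof (cvC_mult _ _ _ _ (cvC_mult _ _ _ _ Hb (cvC_div_INR d c))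
                (cvC_div_INR (d + 1) (-1))) as Hl.
  apply cvC_scal_l with (k := / (d * (d + 1))) in Hl.
  replace (/ (d * (d + 1)) * (beta * 1 * 1)) with (beta / (d * (d + 1))) in Hl
    by (unfold Cdiv; ring).
  refine (cvC_ext_eventually _ _ _ 2 _ Hl). intros n Hn.
  assert (Hcn : c + RtoC (INR n) <> 0).
  { replace (c + RtoC (INR n)) with (c + 1 + RtoC (INR (n - 1)));
      [apply plus_INR_neq_0_of_poch, Hc|].
    replace n with (S (n - 1)) at 2 by lia. rewrite plus_INR_plus_1. ring. }
  assert (Hn1 : -1 + RtoC (INR n) <> 0).
  { intro E. apply (f_equal Re) in E. simpl in E. assert (2 <= INR n)%R by (apply (le_INR 2); lia).
    lra. }
  rewrite F32_term_eq. pose proof (plus_INR_neq_0_of_poch d Hd n).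
  replace (d + RtoC (INR n) + 1) with (d + 1 + RtoC (INR n)) by ring.
  replace (RtoC (INR n) - 1) with (-1 + RtoC (INR n)) by ring.
  field. repeat split; auto.
Qed.

Lemma F32_sum_of_moments (U V : C) : c - a - b - 1 <> 0 ->
  cvC (psum u) U -> cvC (psum (fun k => RtoC (INR k) * u k)) V ->
  s = U + 2 * V / d + (1 + a) * (1 + b) * V / (d * (d + 1) * (c - a - b - 1)).
Proof.
  intros Hab1 HU HV.
  set (W := d * (d + 1) * s - d * (d + 1) * U - (2 * d + 2) * V).
  assert (HW : cvC (psum (fun k => RtoC (INR k) * (RtoC (INR k) - 1) * u k)) W).
  { refine (cvC_ext _ _ _ _ (cvC_minus _ _ _ _ (cvC_minus _ _ _ _ (cvC_scal_l _ _ _ Hs)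
      (cvC_scal_l _ _ _ HU)) (cvC_scal_l _ _ _ HV))).
    intros n. rewrite F32_psum_moments. ring. }
  pose proof (gauss_second_moment_boundary_eq_0 _
                (gauss_second_moment_boundary_cv a b c Hc V W HV HW)) as Hb.
  assert (EW : W = (1 + a) * (1 + b) * V / (c - a - b - 1)).
  { transitivity (((1 + a) * (1 + b) * V - ((1 + a) * (1 + b) * V - (c - a - b - 1) * W))
                  / (c - a - b - 1)); [field; auto|].
    rewrite Hb. f_equal. ring. }
  transitivity ((W + d * (d + 1) * U + (2 * d + 2) * V) / (d * (d + 1))); [unfold W; field; auto|].
  rewrite EW. field. auto.
Qed.

End F32.

Theorem mainTheorem6 (a b c d : C) :
  (* all terms of the series are defined *)
  (forall k : nat, poch (c + 1) k <> 0) ->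
  (forall k : nat, poch d k <> 0) ->
  (* the series converges *)
  ex_series (F32_term a b (d + 2) (c + 1) d 1) ->
  (* all terms of the right-hand side are defined *)
  ~ nonpos_int (c + 1) -> ~ nonpos_int (c - a - b) ->
  ~ nonpos_int (c - a + 1) -> ~ nonpos_int (c - b + 1) ->
  d <> 0 -> d + 1 <> 0 -> c - a - b - 1 <> 0 ->
  is_series (F32_term a b (d + 2) (c + 1) d 1)
    (CGamma (c + 1) * CGamma (c - a - b) / (CGamma (c - a + 1) * CGamma (c - b + 1))
     * ((c - a - b) + 2 * a * b / d
        + a * b * (a + 1) * (b + 1) / (d * (d + 1) * (c - a - b - 1)))).
Proof.
  (* [~ nonpos_int (c + 1)] is implied by the first hypothesis. *)
  intros Hc Hd [s Hs] _ Hab Ha Hb Hd0 Hd1 Hab1.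
  set (G := CGamma (c + 1) * CGamma (c - a - b) / (CGamma (c - a + 1) * CGamma (c - b + 1))).
  assert (HsT : cvC (psum (F32_term a b (d + 2) (c + 1) d 1)) s).
  { apply cvC_of_shift, (cvC_ext (sum_n (F32_term a b (d + 2) (c + 1) d 1))).
    - intros n. apply sum_n_psum.
    - now apply cvC_of_is_series. }
  assert (HU : cvC (psum (gauss_term a b (c + 1))) ((c - a - b) * G)).
  { rewrite <- gamma_ratio_plus_1 by auto.
    apply gauss_summation; auto.
    - replace (c + 1 - a - b) with (c - a - b + 1) by ring. now apply not_nonpos_int_plus_1.
    - now replace (c + 1 - a) with (c - a + 1) by ring.
    - now replace (c + 1 - b) with (c - b + 1) by ring.
    - now apply (INR_mult_gauss_term_cv_0 a b c d Hc Hd Hd0 Hd1 s). }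
  pose proof (gauss_first_moment_cv a b c Hc _ (not_nonpos_int_neq_0 _ Hab) HU
                (gauss_first_moment_boundary_cv_0 a b c d Hc Hd Hd0 Hd1 s HsT)) as HV.
  replace (a * b * ((c - a - b) * G) / (c - a - b)) with (a * b * G) in HV
    by (field; now apply not_nonpos_int_neq_0).
  rewrite (F32_sum_of_moments a b c d Hc Hd Hd0 Hd1 s HsT _ _ Hab1 HU HV) in Hs.
  refine (eq_ind _ _ Hs _ _). field. auto.
Qed.
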